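(* Assume the standing assumptions (A1)–(A2) below. Let $\{\gamma^t\}_{t\ge 0}$ be a step-size sequence with $\gamma^t\ge 0$ for all $t$, $\sum_{t=0}^\infty \gamma^t=\infty$ and $\sum_{t=0}^\infty (\gamma^t)^2<\infty$. Let $\boldsymbol{\mu}^\star$ be an optimal solution of the dual problem (D) and let $M>\|\boldsymbol{\mu}^\star\|_1$. Consider the following iterative procedure, run by every node $i\in\{1,\dots,N\}$ of a connected undirected graph $\mathcal G=(\{1,\dots,N\},\mathcal E)$ with neighbor sets $\mathcal N_i$, starting from arbitrary initial vectors $\boldsymbol{\lambda}_{ij}^0\in\mathbb{R}^S$ for all $(i,j)\in\mathcal E$: at each iteration $t\ge 0$, (1) each node $i$ computes $\big((\mathbf{x}_i^{t+1},\rho_i^{t+1}),\boldsymbol{\mu}_i^{t+1}\big)$ as a primal-dual optimal solution pair of $$\min_{\mathbf{x}_i,\rho_i}\ f_i(\mathbf{x}_i)+M\rho_i\quad\text{s.t. }\rho_i\ge 0,\ \mathbf{x}_i\in X_i,\ \mathbf{g}_i(\mathbf{x}_i)+\sum_{j\in\mathcal N_i}\big(\boldsymbol{\lambda}_{ij}^t-\boldsymbol{\lambda}_{ji}^t\big)\preceq \rho_i\mathbf{1},$$ where $\boldsymbol{\mu}_i^{t+1}\in\mathbb{R}^S$ is the multiplier of the last (vector) inequality constraint; (2) each node $i$ updates, for all $j\in\mathcal N_i$, $\boldsymbol{\lambda}_{ij}^{t+1}=\boldsymbol{\lambda}_{ij}^t-\gamma^t\big(\boldsymbol{\mu}_i^{t+1}-\boldsymbol{\mu}_j^{t+1}\big)$.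 Then: (i) the sequence $\big\{\sum_{i=1}^N\big(f_i(\mathbf{x}_i^t)+M\rho_i^t\big)\big\}_{t\ge 1}$ converges to the optimal cost $f^\star$ of (P); (ii) every limit point of $\{(\mathbf{x}_1^t,\dots,\mathbf{x}_N^t)\}_{t\ge 1}$ is an optimal (in particular feasible) solution of (P).
   Context: Standing setting: $N,S$ are positive integers; for each $i\in\{1,\dots,N\}$, $n_i$ is a positive integer, $X_i\subseteq\mathbb{R}^{n_i}$, $f_i:\mathbb{R}^{n_i}\to\mathbb{R}$, and $\mathbf{g}_i:\mathbb{R}^{n_i}\to\mathbb{R}^S$ with components $\mathbf{g}_{is}$, $s=1,\dots,S$. Vector inequalities $\preceq,\prec,\succeq$ are componentwise; $\mathbf{0},\mathbf{1}\in\mathbb{R}^S$ are the all-zeros and all-ones vectors. (A1) Each $f_i$ is convex, each $X_i$ is nonempty, compact and convex, and each component $\mathbf{g}_{is}$ is convex. (A2) (Slater) There exist $\bar{\mathbf{x}}_i\in\mathrm{relint}(X_i)$, $i=1,\dots,N$, with $\sum_{i=1}^N\mathbf{g}_i(\bar{\mathbf{x}}_i)\prec\mathbf{0}$. Problem (P): $\min_{\mathbf{x}_1,\dots,\mathbf{x}_N}\sum_{i=1}^N f_i(\mathbf{x}_i)$ s.t. $\mathbf{x}_i\in X_i$ for all $i$, $\sum_{i=1}^N\mathbf{g}_i(\mathbf{x}_i)\preceq\mathbf{0}$; its optimal cost is $f^\star$. For $\boldsymbol{\mu}\succeq\mathbf 0$ let $q_i(\boldsymbol{\mu})=\min_{\mathbf{x}_i\in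 X_i}\big(f_i(\mathbf{x}_i)+\boldsymbol{\mu}^\top\mathbf{g}_i(\mathbf{x}_i)\big)$. Dual problem (D): $\max_{\boldsymbol{\mu}\in\mathbb{R}^S}\sum_{i=1}^N q_i(\boldsymbol{\mu})$ s.t. $\boldsymbol{\mu}\succeq\mathbf{0}$. The graph is undirected in the sense that $(i,j)\in\mathcal E$ iff $(j,i)\in\mathcal E$; $\mathcal N_i=\{j:(i,j)\in\mathcal E\}$. *)

From Stdlib Require Fin.
From Stdlib Require Import Reals Lra List.
From Stdlib Require Import Relations.Relation_Operators.
Open Scope R_scope.

Definition vec (n : nat) : Type := Fin.t n -> R.

Fixpoint fsum (n : nat) : (Fin.t n -> R) -> R :=
  match n return (Fin.t n -> R) -> R with
  | O => fun _ => 0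
  | S m => fun f => f Fin.F1 + fsum m (fun k => f (Fin.FS k))
  end.

Definition vzero (n : nat) : vec n := fun _ => 0.
Definition vconst (n : nat) (a : R) : vec n := fun _ => a.
Definition vadd {n : nat} (u v : vec n) : vec n := fun k => u k + v k.
Definition vsub {n : nat} (u v : vec n) : vec n := fun k => u k - v k.
Definition vscale {n : nat} (a : R) (u : vec n) : vec n := fun k => a * u k.
Definition dot {n : nat} (u v : vec n) : R := fsum n (fun k => u k * v k).
Definition norm2 {n : nat} (u : vec n) : R := sqrt (fsum n (fun k => (u k) ^ 2)).
Definition norm1 {n : nat} (u : vec n) : R := fsum n (fun k => Rabs (u k)).
Definition dist {n : nat} (u v : vec n) : R := norm2 (vsub u v).
Definition vle {n : nat} (u v : vec n) : Prop := forall k, u k <= v k.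
Definition vlt {n : nat} (u v : vec n) : Prop := forall k, u k < v k.

Definition is_open {n : nat} (U : vec n -> Prop) : Prop :=
  forall x, U x -> exists eps, 0 < eps /\ forall y, dist y x < eps -> U y.

Definition is_compact {n : nat} (X : vec n -> Prop) : Prop :=
  forall (I : Type) (U : I -> vec n -> Prop),
    (forall i, is_open (U i)) ->
    (forall x, X x -> exists i, U i x) ->
    exists l : list I, forall x, X x -> exists i, In i l /\ U i x.

Definition convex_set {n : nat} (X : vec n -> Prop) : Prop :=
  forall x y theta, X x -> X y -> 0 <= theta <= 1 ->
    X (vadd (vscale theta x) (vscale (1 - theta) y)).

Definition convex_fun {n : nat} (f : vec n -> R) : Prop :=
  forall x y theta, 0 <= theta <= 1 ->
    f (vadd (vscale theta x) (vscale (1 - theta) y)) <= theta * f x + (1 - theta) * f y.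

Definition affine_hull {n : nat} (X : vec n -> Prop) (y : vec n) : Prop :=
  exists l : list (R * vec n),
    (forall p, In p l -> X (snd p)) /\
    fold_right (fun p acc => fst p + acc) 0 l = 1 /\
    forall k, y k = fold_right (fun p acc => fst p * snd p k + acc) 0 l.

Definition relint {n : nat} (X : vec n -> Prop) (x : vec n) : Prop :=
  X x /\ exists eps, 0 < eps /\ forall y, affine_hull X y -> dist y x < eps -> X y.

Definition is_inf (A : R -> Prop) (v : R) : Prop :=
  (forall c, A c -> v <= c) /\ (forall b, (forall c, A c -> b <= c) -> b <= v).

Section P.
Context {N Sd : nat} {n : Fin.t N -> nat}.

Definition P_feasible (X : forall i, vec (n i) -> Prop) (g : forall i, vec (n i) -> vec Sd)
  (x : forall i, vec (n i)) : Prop :=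
  (forall i, X i (x i)) /\ forall s, fsum N (fun i => g i (x i) s) <= 0.

Definition P_cost (f : forall i, vec (n i) -> R) (x : forall i, vec (n i)) : R :=
  fsum N (fun i => f i (x i)).

Definition P_optimal X f g (x : forall i, vec (n i)) : Prop :=
  P_feasible X g x /\ forall y, P_feasible X g y -> P_cost f x <= P_cost f y.

Definition P_optval X f g (v : R) : Prop :=
  is_inf (fun c => exists y, P_feasible X g y /\ c = P_cost f y) v.

Definition q_val (X : forall i, vec (n i) -> Prop) (f : forall i, vec (n i) -> R)
  (g : forall i, vec (n i) -> vec Sd) (i : Fin.t N) (mu : vec Sd) (v : R) : Prop :=
  is_inf (fun c => exists z, X i z /\ c = f i z + dot mu (g i z)) v.

Definition D_optimal X f g (mu : vec Sd) : Prop :=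
  vle (vzero Sd) mu /\
  forall mu', vle (vzero Sd) mu' ->
  forall qv qv' : Fin.t N -> R,
    (forall i, q_val X f g i mu (qv i)) ->
    (forall i, q_val X f g i mu' (qv' i)) ->
    fsum N qv' <= fsum N qv.

Definition dist_prod (x y : forall i, vec (n i)) : R :=
  fsum N (fun i => dist (x i) (y i)).

Definition limit_point (seq : nat -> forall i, vec (n i)) (xb : forall i, vec (n i)) : Prop :=
  forall eps (T : nat), 0 < eps -> exists t, (T <= t)%nat /\ dist_prod (seq t) xb < eps.
End P.

(* ---------- Local problem of node i ----------
   min_{x,rho} f(x) + M rho  s.t. rho >= 0, x in X, g(x) + c <= rho 1,
   where c = sum_{j in N_i} (lambda_ij - lambda_ji). *)
Section Local.
Context {m Sd : nat}.
Variables (X : vec m -> Prop) (f : vec m -> R) (g : vec m -> vec Sd) (M : R) (c : vec Sd).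

Definition loc_feas (x : vec m) (rho : R) : Prop :=
  0 <= rho /\ X x /\ vle (vadd (g x) c) (vconst Sd rho).

Definition loc_primal_opt (x : vec m) (rho : R) : Prop :=
  loc_feas x rho /\ forall y r, loc_feas y r -> f x + M * rho <= f y + M * r.

Definition loc_lagr (mu : vec Sd) (x : vec m) (rho : R) : R :=
  f x + M * rho + dot mu (vsub (vadd (g x) c) (vconst Sd rho)).

(* mu is an optimal solution of the dual problem
   max_{mu >= 0} inf_{x in X, rho >= 0} loc_lagr mu x rho.
   (q(mu') <= q(mu) is written as: every lower bound of L(.,mu') on the
   domain is a lower bound of L(.,mu); this handles the value -infinity.) *)
Definition loc_dual_opt (mu : vec Sd) : Prop :=
  vle (vzero Sd) mu /\
  forall mu', vle (vzero Sd) mu' ->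
  forall b, (forall y r, X y -> 0 <= r -> b <= loc_lagr mu' y r) ->
            (forall y r, X y -> 0 <= r -> b <= loc_lagr mu y r).

Definition loc_pd_opt (x : vec m) (rho : R) (mu : vec Sd) : Prop :=
  loc_primal_opt x rho /\ loc_dual_opt mu.
End Local.

Definition connected {N : nat} (E : Fin.t N -> Fin.t N -> bool) : Prop :=
  forall i j, clos_refl_trans (Fin.t N) (fun a b => E a b = true) i j.

Definition nbsum {N Sd : nat} (E : Fin.t N -> Fin.t N -> bool)
  (lam : Fin.t N -> Fin.t N -> vec Sd) (i : Fin.t N) : vec Sd :=
  fun s => fsum N (fun j => if E i j then lam i j s - lam j i s else 0).

(* Let F_i(c) be the optimal value of the relaxed local problem of node i with coupling
   right-hand side c.  Strong duality for that problem makes -mu_i a subgradient of F_i at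
   c_i = sum_j (lam_ij - lam_ji), and c is linear in lam with adjoint mu |-> mu_i - mu_j;
   so step (2) is a subgradient step, with square-summable but non-summable step sizes, on
   the convex function lam |-> sum_i F_i(c_i(lam)).  Its infimum is f*: it is at least f*
   because M > ||mu*||_1 makes the penalty exact, and it is attained at multipliers that
   spread the constraint value of an optimal solution of (P) evenly over the connected
   graph.  The distance recursion of the subgradient method, together with a Lipschitz bound
   on consecutive values, gives convergence of the values to f*; the exact-penalty bound then
   forces the slacks rho_i to zero, and lower semicontinuity of the convex data passes
   feasibility and optimality to every limit point.  The strong duality statements (for the
   local problems and for (P) under Slater's condition) are obtained without separation
   theorems, from an approachability argument: regret matching against a hypothetical best
   response produces an average point that violates the penalty bound. *)

From Pilot Require Import Defs.
From Stdlib Require Import Reals Lra Lia ZArith List.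
From Stdlib Require Fin.
From Stdlib Require Import Relations.Relation_Operators.
From Stdlib Require Import Classical ClassicalEpsilon FunctionalExtensionality.
Open Scope R_scope.

(** * Finite sums *)

Lemma fsum_ext n (f g : Fin.t n -> R) : (forall k, f k = g k) -> fsum n f = fsum n g.
Proof.
  induction n; simpl; intros H; [reflexivity|].
  rewrite H, (IHn (fun k => f (Fin.FS k)) (fun k => g (Fin.FS k))); auto.
Qed.

Lemma fsum_add n (f g : Fin.t n -> R) : fsum n (fun k => f k + g k) = fsum n f + fsum n g.
Proof.
  induction n; simpl; [lra|].
  rewrite (IHn (fun k => f (Fin.FS k)) (fun k => g (Fin.FS k))). lra.
Qed.

Lemma fsum_scal n (f : Fin.t n -> R) c : fsum n (fun k => c * f k) = c * fsum n f.
Proof. induction n; simpl; [lra|]. rewrite (IHn (fun k => f (Fin.FS k))). lra. Qed.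

Lemma fsum_const n c : fsum n (fun _ => c) = INR n * c.
Proof. induction n; simpl fsum; [simpl; lra|]. rewrite IHn, S_INR. lra. Qed.

Lemma fsum_zero n : fsum n (fun _ => 0) = 0.
Proof. rewrite fsum_const. lra. Qed.

Lemma fsum_opp n (f : Fin.t n -> R) : fsum n (fun k => - f k) = - fsum n f.
Proof. induction n; simpl; [lra|]. rewrite (IHn (fun k => f (Fin.FS k))). lra. Qed.

Lemma fsum_sub n (f g : Fin.t n -> R) : fsum n (fun k => f k - g k) = fsum n f - fsum n g.
Proof.
  unfold Rminus. rewrite fsum_add, fsum_opp. reflexivity.
Qed.

Lemma fsum_le n (f g : Fin.t n -> R) : (forall k, f k <= g k) -> fsum n f <= fsum n g.
Proof.
  induction n; simpl; intros H; [lra|].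
  pose proof (H Fin.F1).
  pose proof (IHn (fun k => f (Fin.FS k)) (fun k => g (Fin.FS k)) (fun k => H (Fin.FS k))). lra.
Qed.

Lemma fsum_nonneg n (f : Fin.t n -> R) : (forall k, 0 <= f k) -> 0 <= fsum n f.
Proof. intros H. rewrite <- (fsum_zero n). apply fsum_le; auto. Qed.

Lemma fsum_term_le n (f : Fin.t n -> R) k : (forall k, 0 <= f k) -> f k <= fsum n f.
Proof.
  induction n; intros H; [inversion k|].
  simpl. apply (Fin.caseS' k).
  - pose proof (fsum_nonneg n (fun k => f (Fin.FS k)) (fun k => H (Fin.FS k))). lra.
  - intros p. pose proof (IHn (fun k => f (Fin.FS k)) p (fun k => H (Fin.FS k))).
    pose proof (H Fin.F1). simpl in *. lra.
Qed.

Lemma fsum_eq0_term n (f : Fin.t n -> R) :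
  (forall k, 0 <= f k) -> fsum n f = 0 -> forall k, f k = 0.
Proof. intros H H0 k. pose proof (fsum_term_le n f k H). pose proof (H k). lra. Qed.

Lemma fsum_comm n m (F : Fin.t n -> Fin.t m -> R) :
  fsum n (fun i => fsum m (fun j => F i j)) = fsum m (fun j => fsum n (fun i => F i j)).
Proof.
  induction n; simpl.
  - rewrite fsum_zero. reflexivity.
  - rewrite (IHn (fun i j => F (Fin.FS i) j)), <- fsum_add. reflexivity.
Qed.

Lemma Rabs_fsum_le n (f : Fin.t n -> R) : Rabs (fsum n f) <= fsum n (fun k => Rabs (f k)).
Proof.
  induction n; simpl; [rewrite Rabs_R0; lra|].
  pose proof (IHn (fun k => f (Fin.FS k))).
  pose proof (Rabs_triang (f Fin.F1) (fsum n (fun k => f (Fin.FS k)))). lra.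
Qed.

Lemma Rabs_fsum_bound n (f : Fin.t n -> R) c :
  (forall k, Rabs (f k) <= c) -> Rabs (fsum n f) <= INR n * c.
Proof.
  intros H. eapply Rle_trans; [apply Rabs_fsum_le|].
  rewrite <- fsum_const. apply fsum_le; auto.
Qed.

Lemma fsum_delta n (k : Fin.t n) (F : Fin.t n -> R) :
  fsum n (fun i => if Fin.eq_dec i k then F i else 0) = F k.
Proof.
  induction n; [inversion k|]. simpl. apply (Fin.caseS' k).
  - destruct (Fin.eq_dec Fin.F1 Fin.F1) as [_|e]; [|congruence].
    rewrite (fsum_ext n _ (fun _ => 0)); [rewrite fsum_zero; lra|].
    intros i. destruct (Fin.eq_dec (Fin.FS i) Fin.F1); [discriminate|auto].
  - intros p. destruct (Fin.eq_dec Fin.F1 (Fin.FS p)); [discriminate|].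
    rewrite Rplus_0_l, <- (IHn p (fun i => F (Fin.FS i))). apply fsum_ext. intros i.
    destruct (Fin.eq_dec (Fin.FS i) (Fin.FS p)) as [e|e];
      destruct (Fin.eq_dec i p) as [e'|e']; subst; auto.
    + apply Fin.FS_inj in e. contradiction.
    + contradiction.
Qed.

Lemma fsum_delta_l n (k : Fin.t n) (F : Fin.t n -> R) :
  fsum n (fun i => if Fin.eq_dec k i then F i else 0) = F k.
Proof.
  rewrite <- (fsum_delta n k F). apply fsum_ext. intros i.
  destruct (Fin.eq_dec k i), (Fin.eq_dec i k); subst; congruence.
Qed.

Fixpoint fin_enum (n : nat) : list (Fin.t n) :=
  match n with O => nil | S m => Fin.F1 :: map Fin.FS (fin_enum m) end.

Lemma fin_enum_all n (i : Fin.t n) : In i (fin_enum n).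
Proof. induction i; simpl; auto. right. apply in_map. auto. Qed.

Lemma dep_choice {A : Type} {B : A -> Type} (P : forall a, B a -> Prop) :
  (forall a, exists b, P a b) -> exists h : forall a, B a, forall a, P a (h a).
Proof.
  intros H. exists (fun a => proj1_sig (constructive_indefinite_description _ (H a))).
  intros a. exact (proj2_sig (constructive_indefinite_description _ (H a))).
Qed.

Lemma fin_uniform_bound {N} (P : Fin.t N -> R -> Prop) :
  (forall i B B', P i B -> B <= B' -> P i B') -> (forall i, exists B, P i B) ->
  exists B, 0 <= B /\ forall i, P i B.
Proof.
  intros Hmono H. destruct (choice _ H) as [Bf HB].
  exists (fsum N (fun i => Rabs (Bf i))). split.
  - apply fsum_nonneg; intros; apply Rabs_pos.
  - intros i. apply (Hmono i (Bf i)); auto. eapply Rle_trans; [apply Rle_abs|].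
    apply (fsum_term_le N (fun i => Rabs (Bf i))). intros; apply Rabs_pos.
Qed.

Lemma fin_uniform_rank (N : nat) (P : Fin.t N -> nat -> Prop) :
  (forall i, exists K, forall k, (K <= k)%nat -> P i k) ->
  exists K, forall i k, (K <= k)%nat -> P i k.
Proof.
  intros H.
  assert (HL : forall L : list (Fin.t N), exists K, forall i, In i L -> forall k, (K <= k)%nat -> P i k).
  { induction L as [|i0 L [K1 HK1]]; [exists 0%nat; intros i []|].
    destruct (H i0) as [K0 HK0]. exists (max K0 K1).
    intros i [<-|Hi] k Hk; [apply HK0|apply HK1]; auto; lia. }
  destruct (HL (fin_enum N)) as [K HK]. exists K. intros i k Hk. apply HK; auto. apply fin_enum_all.
Qed.

Lemma fin_pos_lower_bound {N} (u : Fin.t N -> R) :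
  (forall k, 0 < u k) -> exists d, 0 < d /\ forall k, d <= u k.
Proof.
  intros H. destruct (fin_uniform_bound (fun k B => / u k <= B)) as [B [HB0 HB]].
  - intros; lra.
  - intros k; exists (/ u k); lra.
  - exists (/ (B + 1)). split; [apply Rinv_0_lt_compat; lra|].
    intros k. specialize (HB k). specialize (H k). rewrite <- (Rinv_inv (u k)).
    apply Rinv_le_contravar; [apply Rinv_0_lt_compat; auto|lra].
Qed.

(** * Vectors and the l1 norm *)

Lemma vec_ext {n} (u v : vec n) : (forall k, u k = v k) -> u = v.
Proof. intros; apply functional_extensionality; auto. Qed.

Lemma dot_add_r {n} (u v w : vec n) : dot u (vadd v w) = dot u v + dot u w.
Proof. unfold dot, vadd. rewrite <- fsum_add. apply fsum_ext. intros; ring. Qed.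

Lemma dot_sub_r {n} (u v w : vec n) : dot u (vsub v w) = dot u v - dot u w.
Proof. unfold dot, vsub. rewrite <- fsum_sub. apply fsum_ext. intros; ring. Qed.

Lemma dot_sub_l {n} (u v w : vec n) : dot (vsub u v) w = dot u w - dot v w.
Proof. unfold dot, vsub. rewrite <- fsum_sub. apply fsum_ext. intros; ring. Qed.

Lemma dot_const_r {n} (u : vec n) c : dot u (vconst n c) = c * fsum n u.
Proof. unfold dot, vconst. rewrite <- fsum_scal. apply fsum_ext. intros; ring. Qed.

Lemma dot_le_r {n} (u v w : vec n) : vle (vzero n) u -> vle v w -> dot u v <= dot u w.
Proof.
  intros Hu Hvw. unfold dot. apply fsum_le. intros k.
  apply Rmult_le_compat_l; [apply Hu|apply Hvw].
Qed.

Lemma Rabs_coord_le_norm2 {n} (v : vec n) k : Rabs (v k) <= norm2 v.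
Proof.
  unfold norm2. rewrite <- sqrt_Rsqr_abs. apply sqrt_le_1_alt.
  unfold Rsqr. replace (v k * v k) with ((fun j => v j ^ 2) k) by (simpl; ring).
  apply (fsum_term_le n (fun j => v j ^ 2)). intros; apply pow2_ge_0.
Qed.

Lemma Rabs_coord_le_norm1 {n} (v : vec n) k : Rabs (v k) <= norm1 v.
Proof. apply (fsum_term_le n (fun k => Rabs (v k))). intros; apply Rabs_pos. Qed.

Lemma norm1_nonneg {n} (v : vec n) : 0 <= norm1 v.
Proof. apply fsum_nonneg. intros; apply Rabs_pos. Qed.

Lemma norm1_le_norm2 {n} (v : vec n) : norm1 v <= INR n * norm2 v.
Proof.
  unfold norm1. rewrite <- fsum_const. apply fsum_le. intros; apply Rabs_coord_le_norm2.
Qed.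

Lemma norm1_sub_diag {n} (u : vec n) : norm1 (vsub u u) = 0.
Proof.
  unfold norm1, vsub. rewrite (fsum_ext _ _ (fun _ => 0)); [apply fsum_zero|].
  intros; rewrite Rminus_diag, Rabs_R0; auto.
Qed.

Lemma norm1_triangle {n} (u v w : vec n) :
  norm1 (vsub u w) <= norm1 (vsub u v) + norm1 (vsub v w).
Proof.
  unfold norm1, vsub. rewrite <- fsum_add. apply fsum_le. intros k.
  replace (u k - w k) with ((u k - v k) + (v k - w k)) by ring. apply Rabs_triang.
Qed.

Lemma norm1_sub_sym {n} (u v : vec n) : norm1 (vsub u v) = norm1 (vsub v u).
Proof. unfold norm1, vsub. apply fsum_ext. intros; apply Rabs_minus_sym. Qed.

Lemma norm1_sub_eq0 {n} (u v : vec n) : norm1 (vsub u v) = 0 -> u = v.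
Proof.
  intros H. apply vec_ext. intros k.
  pose proof (fsum_eq0_term n _ (fun k => Rabs_pos _) H k) as Hk. cbv beta in Hk.
  unfold vsub in Hk. destruct (Req_dec (u k - v k) 0) as [|Hne]; [lra|].
  apply Rabs_no_R0 in Hne. contradiction.
Qed.

Lemma norm1_scal {n} (u : vec n) a : norm1 (fun k => a * u k) = Rabs a * norm1 u.
Proof.
  unfold norm1. rewrite <- fsum_scal. apply fsum_ext. intros; apply Rabs_mult.
Qed.

Lemma norm1_ball_open {n} (c : vec n) r : is_open (fun y => norm1 (vsub y c) < r).
Proof.
  intros y Hy. pose proof (pos_INR n).
  set (a := r - norm1 (vsub y c)).
  exists (a / (INR n + 1)). split; [apply Rdiv_lt_0_compat; unfold a; lra|].
  intros z Hz. unfold Defs.dist in Hz.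
  pose proof (norm1_triangle z y c). pose proof (norm1_le_norm2 (vsub z y)).
  assert (INR n * norm2 (vsub z y) <= INR n * (a / (INR n + 1)))
    by (apply Rmult_le_compat_l; lra).
  assert (INR n * (a / (INR n + 1)) < a).
  { apply (Rmult_lt_reg_r (INR n + 1)); [lra|].
    replace (INR n * (a / (INR n + 1)) * (INR n + 1)) with (INR n * a) by (field; lra).
    unfold a; nra. }
  unfold a in *; lra.
Qed.

Definition vcomb {n} (th : R) (u v : vec n) : vec n := vadd (vscale th u) (vscale (1 - th) v).

Lemma vcomb_eq {n} (u v w : vec n) th :
  (forall k, th * u k + (1 - th) * v k = w k) -> vcomb th u v = w.
Proof. intros H; apply vec_ext; intros k; unfold vcomb, vadd, vscale; auto. Qed.

Lemma inv_succ_small e : 0 < e -> exists T, forall k, (T <= k)%nat -> / (INR k + 1) < e.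
Proof.
  intros He. destruct (archimed (/ e)) as [H1 _].
  assert (0 <= up (/ e))%Z by (apply le_IZR; pose proof (Rinv_0_lt_compat e He); lra).
  exists (Z.to_nat (up (/ e))). intros k Hk.
  apply le_INR in Hk. rewrite INR_IZR_INZ, Z2Nat.id in Hk by auto.
  rewrite <- (Rinv_inv e). apply Rinv_lt_contravar.
  - apply Rmult_lt_0_compat; [apply Rinv_0_lt_compat; auto|pose proof (pos_INR k); lra].
  - lra.
Qed.

Lemma inv_succ_pos k : 0 < / (INR k + 1).
Proof. apply Rinv_0_lt_compat. pose proof (pos_INR k). lra. Qed.

Lemma exists_pos_nat_ge c : exists T, (1 <= T)%nat /\ c <= INR T.
Proof.
  destruct (archimed c) as [H1 _].
  exists (S (Z.to_nat (up c))). split; [lia|].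
  rewrite S_INR. destruct (Z_lt_le_dec (up c) 0) as [Hn|Hp].
  - pose proof (pos_INR (Z.to_nat (up c))). apply IZR_lt in Hn. lra.
  - rewrite INR_IZR_INZ, Z2Nat.id by auto. lra.
Qed.

(** * Convex functions on R^n *)

Definition vcons {m} (a : R) (v : vec m) : vec (S m) :=
  fun k => Fin.caseS' k (fun _ => R) a v.

Lemma vcons_eta {m} (y : vec (S m)) : y = vcons (y Fin.F1) (fun k => y (Fin.FS k)).
Proof. apply vec_ext. intros k. apply (Fin.caseS' k); reflexivity. Qed.

Lemma norm1_vcons {m} a (v : vec m) b (w : vec m) :
  norm1 (vsub (vcons a v) (vcons b w)) = Rabs (a - b) + norm1 (vsub v w).
Proof. reflexivity. Qed.

Lemma convex_fun_slice {m} (f : vec (S m) -> R) a :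
  convex_fun f -> convex_fun (fun v : vec m => f (vcons a v)).
Proof.
  intros Hf u v th Hth.
  replace (vcons a (vadd (vscale th u) (vscale (1 - th) v)))
    with (vcomb th (vcons a u) (vcons a v)); [apply Hf; auto|].
  apply vec_ext; intros k; apply (Fin.caseS' k); unfold vcomb, vadd, vscale; simpl; intros; ring.
Qed.

Lemma Rabs_sign_decomp u : exists sg, (sg = 1 \/ sg = -1) /\ Rabs u * sg = u.
Proof.
  destruct (Rle_dec 0 u).
  - exists 1. rewrite Rabs_right by lra. split; [auto|ring].
  - exists (-1). rewrite Rabs_left by lra. split; [auto|ring].
Qed.

(* Induction on the dimension: a point of the unit l1-ball around (x0, x') is a convex
   combination of a point of the ball of the slice {x0} x R^m and of (x0 +- 1, x'). *)
Lemma convex_locally_bounded_above n (f : vec n -> R) :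
  convex_fun f -> forall x, exists C, forall y, norm1 (vsub y x) <= 1 -> f y <= C.
Proof.
  revert f; induction n as [|n IHn]; intros f Hf x.
  { exists (f x). intros y _. replace y with x; [lra|]. apply vec_ext; intros k; inversion k. }
  rewrite (vcons_eta x). set (x0 := x Fin.F1). set (x' := fun k => x (Fin.FS k)).
  destruct (IHn _ (convex_fun_slice f x0 Hf) x') as [C1 HC1].
  set (Cq := Rmax (f (vcons (x0 + 1) x')) (f (vcons (x0 - 1) x'))).
  exists (Rmax C1 Cq). intros y Hy. rewrite (vcons_eta y) in *.
  rewrite norm1_vcons in Hy.
  set (y0 := y Fin.F1) in *. set (y' := fun k => y (Fin.FS k)) in *. clearbody y0 y'.
  pose proof (norm1_nonneg (vsub y' x')). pose proof (Rabs_pos (y0 - x0)).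
  set (a := Rabs (y0 - x0)) in *. set (b := norm1 (vsub y' x')) in *.
  pose proof (Rmax_l C1 Cq). pose proof (Rmax_r C1 Cq).
  destruct (Rabs_sign_decomp (y0 - x0)) as [sg [Hsg1 Hsg]]. fold a in Hsg.
  set (q := vcons (x0 + sg) x').
  assert (Hq : f q <= Cq).
  { unfold q, Cq. destruct Hsg1 as [->| ->]; [apply Rmax_l|].
    replace (x0 + -1) with (x0 - 1) by ring. apply Rmax_r. }
  destruct (Rlt_dec a 1) as [Ha1|Ha1].
  - set (p' := fun k => x' k + / (1 - a) * (y' k - x' k)).
    assert (Hp' : norm1 (vsub p' x') <= 1).
    { replace (vsub p' x') with (fun k => / (1 - a) * vsub y' x' k)
        by (apply vec_ext; intros k; unfold p', vsub; ring).
      rewrite norm1_scal, Rabs_right by (apply Rle_ge, Rlt_le, Rinv_0_lt_compat; lra).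
      apply (Rmult_le_reg_l (1 - a)); [lra|].
      rewrite <- Rmult_assoc, Rinv_r by lra. fold b. lra. }
    pose proof (HC1 p' Hp') as Hfp. cbv beta in Hfp.
    replace (vcons y0 y') with (vcomb (1 - a) (vcons x0 p') q).
    + eapply Rle_trans; [apply Hf; lra|].
      assert ((1 - a) * f (vcons x0 p') <= (1 - a) * Rmax C1 Cq) by (apply Rmult_le_compat_l; lra).
      assert ((1 - (1 - a)) * f q <= (1 - (1 - a)) * Rmax C1 Cq) by (apply Rmult_le_compat_l; lra).
      lra.
    + apply vec_ext; intros k; apply (Fin.caseS' k); unfold vcomb, vadd, vscale, q, p'; simpl.
      * replace y0 with (x0 + a * sg) by lra. ring.
      * intros j. field. lra.
  - assert (Ha : a = 1) by lra. assert (Hb0 : b = 0) by lra.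
    rewrite Ha, Rmult_1_l in Hsg. apply norm1_sub_eq0 in Hb0. subst y'.
    replace (vcons y0 x') with q by (unfold q; f_equal; lra). lra.
Qed.

Lemma convex_lower_semicontinuous n (f : vec n -> R) : convex_fun f -> forall x eta, 0 < eta ->
  exists del, 0 < del /\ forall y, norm1 (vsub y x) < del -> f x - eta < f y.
Proof.
  intros Hf x eta Heta. destruct (convex_locally_bounded_above n f Hf x) as [C HC].
  assert (HCx : f x <= C) by (apply HC; rewrite norm1_sub_diag; lra).
  exists (Rmin 1 (eta / (C - f x + 1))). split.
  { apply Rmin_glb_lt; [lra|]. apply Rdiv_lt_0_compat; lra. }
  intros y Hy. set (s := norm1 (vsub y x)) in *.
  assert (Hs1 : s < 1) by (eapply Rlt_le_trans; [exact Hy|apply Rmin_l]).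
  assert (Hs2 : s < eta / (C - f x + 1)) by (eapply Rlt_le_trans; [exact Hy|apply Rmin_r]).
  assert (Hs0 : 0 <= s) by apply norm1_nonneg.
  destruct (Req_dec s 0) as [E0|E0].
  { apply norm1_sub_eq0 in E0. subst. lra. }
  (* x lies on the segment from y to the reflected point z, at distance s/(1+s) from y *)
  set (z := fun k => x k - / s * (y k - x k)).
  assert (Hz : norm1 (vsub z x) <= 1).
  { replace (vsub z x) with (fun k => - / s * vsub y x k)
      by (apply vec_ext; intros k; unfold z, vsub; ring).
    rewrite norm1_scal, Rabs_Ropp, Rabs_right by (apply Rle_ge, Rlt_le, Rinv_0_lt_compat; lra).
    fold s. rewrite Rinv_l; lra. }
  pose proof (HC z Hz) as Hfz.
  assert (Hx : x = vcomb (/ (1 + s)) y z) by (symmetry; apply vcomb_eq; intros k; unfold z; field; lra).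
  assert (Hcv : f x <= / (1 + s) * f y + (1 - / (1 + s)) * f z).
  { rewrite Hx at 1. apply Hf. split; [left; apply Rinv_0_lt_compat; lra|].
    rewrite <- Rinv_1. apply Rinv_le_contravar; lra. }
  assert (Hm : (1 + s) * f x <= f y + s * C).
  { replace (1 - / (1 + s)) with (s / (1 + s)) in Hcv by (field; lra).
    apply (Rmult_le_compat_l (1 + s)) in Hcv; [|lra].
    replace ((1 + s) * (/ (1 + s) * f y + s / (1 + s) * f z)) with (f y + s * f z) in Hcv
      by (field; lra).
    assert (s * f z <= s * C) by (apply Rmult_le_compat_l; lra). lra. }
  assert (s * (C - f x + 1) < eta).
  { apply (Rmult_lt_compat_r (C - f x + 1)) in Hs2; [|lra].
    unfold Rdiv in Hs2. rewrite Rmult_assoc, Rinv_l in Hs2 by lra. lra. }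
  nra.
Qed.

Lemma fold_max_in {A} (t : A -> R) l c :
  In c l -> t c <= fold_right (fun c acc => Rmax (t c) acc) 0 l.
Proof.
  induction l; simpl; intros H; [contradiction|]. destruct H; subst; [apply Rmax_l|].
  eapply Rle_trans; [apply IHl; auto|apply Rmax_r].
Qed.

(* Cover X by unit balls; on the ball around c, the upper bound C_c and convexity along the
   segment from y to its reflection 2c - y bound f from below by 2 f(c) - C_c. *)
Lemma convex_bounded_on_compact n (X : vec n -> Prop) (f : vec n -> R) :
  is_compact X -> convex_fun f -> exists B, forall y, X y -> Rabs (f y) <= B.
Proof.
  intros HX Hf.
  destruct (choice _ (convex_locally_bounded_above n f Hf)) as [Cf HCf].
  destruct (HX (vec n) (fun c y => norm1 (vsub y c) < 1)) as [l Hl].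
  - intros c; apply norm1_ball_open.
  - intros x _. exists x. rewrite norm1_sub_diag. lra.
  - exists (fold_right (fun c acc => Rmax (2 * Rabs (Cf c) + 2 * Rabs (f c)) acc) 0 l).
    intros y Hy. destruct (Hl y Hy) as [c [Hc Hyc]].
    pose proof (fold_max_in (fun c => 2 * Rabs (Cf c) + 2 * Rabs (f c)) l c Hc) as Hb. simpl in Hb.
    set (w := fun k => 2 * c k - y k).
    assert (Hw : norm1 (vsub w c) <= 1).
    { replace (vsub w c) with (vsub c y) by (apply vec_ext; intros k; unfold w, vsub; ring).
      rewrite norm1_sub_sym. lra. }
    assert (Hc2 : c = vcomb (1/2) y w) by (symmetry; apply vcomb_eq; intros; unfold w; field).
    assert (f c <= 1/2 * f y + (1 - 1/2) * f w) by (rewrite Hc2 at 1; apply Hf; lra).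
    pose proof (HCf c y (Rlt_le _ _ Hyc)). pose proof (HCf c w Hw).
    pose proof (Rle_abs (Cf c)). pose proof (Rle_abs (f c)).
    pose proof (Rle_abs (- Cf c)). pose proof (Rle_abs (- f c)). rewrite Rabs_Ropp in *.
    apply Rabs_le. lra.
Qed.

Lemma convex_vec_bounded_on_compact m Sd (X : vec m -> Prop) (g : vec m -> vec Sd) :
  is_compact X -> (forall s, convex_fun (fun z => g z s)) ->
  exists B, 0 <= B /\ forall s y, X y -> Rabs (g y s) <= B.
Proof.
  intros HX Hg.
  destruct (fin_uniform_bound (fun s B => forall y, X y -> Rabs (g y s) <= B)) as [B [HB0 HB]].
  - intros s B B' H1 H2 y Hy. specialize (H1 y Hy). lra.
  - intros s. apply (convex_bounded_on_compact m X (fun z => g z s) HX (Hg s)).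
  - exists B. auto.
Qed.

(** * Compactness and subsequences *)

Definition strict_incr (phi : nat -> nat) := forall k, (phi k < phi (S k))%nat.

Lemma strict_incr_ge_id phi : strict_incr phi -> forall k, (k <= phi k)%nat.
Proof. intros H k; induction k; [lia|]. specialize (H k). lia. Qed.

Lemma strict_incr_le phi : strict_incr phi -> forall a b, (a <= b)%nat -> (phi a <= phi b)%nat.
Proof. intros H a b Hab; induction Hab; [lia|]. specialize (H m). lia. Qed.

Lemma strict_incr_comp phi psi :
  strict_incr phi -> strict_incr psi -> strict_incr (fun k => phi (psi k)).
Proof.
  intros H1 H2 k. pose proof (strict_incr_le phi H1 (S (psi k)) (psi (S k)) (H2 k)).
  specialize (H1 (psi k)). lia.
Qed.

Lemma extract_subsequence (P : nat -> nat -> Prop) :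
  (forall m T, exists t, (T <= t)%nat /\ P m t) ->
  exists phi, strict_incr phi /\ forall k, P k (phi k).
Proof.
  intros H. destruct (choice (fun mT t => (snd mT <= t)%nat /\ P (fst mT) t)) as [nx Hnx].
  { intros [m T]. apply H. }
  exists (fix phi k := match k with O => nx (O, O) | S k' => nx (S k', S (phi k')) end).
  split.
  - intros k. simpl. destruct (Hnx (S k, S ((fix phi k := match k with
      O => nx (O, O) | S k' => nx (S k', S (phi k')) end) k))). simpl in *. lia.
  - intros [|k]; simpl; apply (Hnx (_, _)).
Qed.

Definition cv_norm1 {n} (w : nat -> vec n) (p : vec n) :=
  forall e, 0 < e -> exists K, forall k, (K <= k)%nat -> norm1 (vsub (w k) p) < e.

Lemma cv_norm1_subseq {n} (w : nat -> vec n) p phi :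
  cv_norm1 w p -> strict_incr phi -> cv_norm1 (fun k => w (phi k)) p.
Proof.
  intros H Hp e He. destruct (H e He) as [K HK]. exists K. intros k Hk. apply HK.
  pose proof (strict_incr_ge_id phi Hp k). lia.
Qed.

Lemma fold_maxn_in {A} (t : A -> nat) l c :
  In c l -> (t c <= fold_right (fun c acc => max (t c) acc) 0 l)%nat.
Proof.
  induction l; simpl; intros H; [contradiction|]. destruct H; subst; [apply Nat.le_max_l|].
  eapply Nat.le_trans; [apply IHl; auto|apply Nat.le_max_r].
Qed.

(* If no point of X were a cluster point, each p would have a ball that the sequence
   eventually avoids; a finite subcover then bounds the sequence away from X. *)
Lemma compact_cluster_point {n} (X : vec n -> Prop) (u : nat -> vec n) :
  is_compact X -> (forall k, X (u k)) ->
  exists p, X p /\ forall e T, 0 < e -> exists k, (T <= k)%nat /\ norm1 (vsub (u k) p) < e.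
Proof.
  intros HX Hu. apply NNPP. intros Hn.
  assert (Hp : forall p : {p | X p}, exists eT : R * nat, 0 < fst eT /\
            forall k, (snd eT <= k)%nat -> fst eT <= norm1 (vsub (u k) (proj1_sig p))).
  { intros [p Hp0]. simpl. apply NNPP. intros H1. apply Hn. exists p. split; auto.
    intros e T He. apply NNPP. intros H2. apply H1. exists (e, T). simpl. split; auto.
    intros k Hk. apply Rnot_lt_le. intros H3. apply H2. exists k; auto. }
  destruct (choice _ Hp) as [ET HET].
  destruct (HX {p | X p} (fun p y => norm1 (vsub y (proj1_sig p)) < fst (ET p))) as [l Hl].
  - intros p; apply norm1_ball_open.
  - intros x Hx. exists (exist _ x Hx). simpl. rewrite norm1_sub_diag. apply HET.
  - set (Tm := fold_right (fun p acc => max (snd (ET p)) acc) 0%nat l).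
    destruct (Hl (u Tm) (Hu Tm)) as [p [Hpl Hpu]].
    pose proof (fold_maxn_in (fun p => snd (ET p)) l p Hpl).
    destruct (HET p) as [_ H2]. specialize (H2 Tm H). lra.
Qed.

Lemma compact_convergent_subseq {n} (X : vec n -> Prop) (u : nat -> vec n) :
  is_compact X -> (forall k, X (u k)) ->
  exists p phi, X p /\ strict_incr phi /\ cv_norm1 (fun k => u (phi k)) p.
Proof.
  intros HX Hu. destruct (compact_cluster_point X u HX Hu) as [p [Hp Hc]].
  destruct (extract_subsequence (fun m t => norm1 (vsub (u t) p) < / (INR m + 1)))
    as [phi [Hi Hphi]].
  { intros m T. apply Hc, inv_succ_pos. }
  exists p, phi. repeat split; auto.
  intros e He. destruct (inv_succ_small e He) as [T HT]. exists T. intros k Hk.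
  eapply Rlt_trans; [apply Hphi|]. apply HT; auto.
Qed.

Lemma compact_closed_limit {n} (X : vec n -> Prop) p : is_compact X ->
  (forall e, 0 < e -> exists y, X y /\ norm1 (vsub y p) < e) -> X p.
Proof.
  intros HX H.
  destruct (choice (fun k y => X y /\ norm1 (vsub y p) < / (INR k + 1))) as [u Hu].
  { intros k; apply H, inv_succ_pos. }
  destruct (compact_cluster_point X u HX (fun k => proj1 (Hu k))) as [c [Hc Hcl]].
  replace p with c; auto. apply norm1_sub_eq0.
  pose proof (norm1_nonneg (vsub c p)). apply Rle_antisym; auto. apply Rnot_lt_le. intros Hd.
  set (d := norm1 (vsub c p)) in *.
  destruct (inv_succ_small (d/2)) as [T HT]; [lra|].
  destruct (Hcl (d/2) T) as [k [Hk Hk2]]; [lra|].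
  pose proof (norm1_triangle c (u k) p). rewrite norm1_sub_sym in Hk2.
  pose proof (proj2 (Hu k)). pose proof (HT k Hk). unfold d in *. lra.
Qed.

Section ProductSubsequence.
Variables (N : nat) (n : Fin.t N -> nat) (X : forall i, vec (n i) -> Prop).
Hypothesis HX : forall i, is_compact (X i).
Variable u : nat -> forall i, vec (n i).
Hypothesis Hu : forall k i, X i (u k i).

Lemma convergent_subseq_on_list (L : list (Fin.t N)) :
  exists phi, strict_incr phi /\
    forall i, In i L -> exists p, X i p /\ cv_norm1 (fun k => u (phi k) i) p.
Proof.
  induction L as [|i0 L [phi1 [Hi1 H1]]].
  { exists (fun k => k). split; [intros k; lia|]. intros i []. }
  destruct (compact_convergent_subseq (X i0) (fun k => u (phi1 k) i0) (HX i0) (fun k => Hu _ i0))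
    as [p0 [phi2 [Hp0 [Hi2 Hc2]]]].
  exists (fun k => phi1 (phi2 k)). split; [apply strict_incr_comp; auto|].
  intros i [<-|Hi]; [exists p0; auto|].
  destruct (H1 i Hi) as [p [Hp Hc]]. exists p; split; auto.
  apply (cv_norm1_subseq (fun k => u (phi1 k) i) p phi2); auto.
Qed.

Lemma product_convergent_subseq :
  exists phi (p : forall i, vec (n i)), strict_incr phi /\
    forall i, X i (p i) /\ cv_norm1 (fun k => u (phi k) i) (p i).
Proof.
  destruct (convergent_subseq_on_list (fin_enum N)) as [phi [Hi H]].
  destruct (dep_choice (fun i p => X i p /\ cv_norm1 (fun k => u (phi k) i) p)) as [p Hp].
  { intros i; apply H, fin_enum_all. }
  exists phi, p. auto.
Qed.

End ProductSubsequence.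

Lemma fsum_convex_lsc (N : nat) (n : Fin.t N -> nat) (h : forall i, vec (n i) -> R)
  (w : nat -> forall i, vec (n i)) (p : forall i, vec (n i)) :
  (forall i, convex_fun (h i)) -> (forall i, cv_norm1 (fun k => w k i) (p i)) ->
  forall eta, 0 < eta -> exists K, forall k, (K <= k)%nat ->
    fsum N (fun i => h i (p i)) <= fsum N (fun i => h i (w k i)) + eta.
Proof.
  intros Hh Hc eta He. pose proof (pos_INR N).
  set (e := eta / (INR N + 1)). assert (He' : 0 < e) by (apply Rdiv_lt_0_compat; lra).
  destruct (fin_uniform_rank N (fun i k => h i (p i) - e < h i (w k i))) as [K HK].
  { intros i. destruct (convex_lower_semicontinuous _ (h i) (Hh i) (p i) e He') as [d [Hd Hd2]].
    destruct (Hc i d Hd) as [K HK]. exists K. intros k Hk. apply Hd2, HK; auto. }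
  exists K. intros k Hk.
  assert (Hs : fsum N (fun i => h i (p i)) <= fsum N (fun i => h i (w k i) + e)).
  { apply fsum_le. intros i. pose proof (HK i k Hk). lra. }
  rewrite fsum_add, fsum_const in Hs.
  assert (INR N * e <= eta).
  { unfold e. apply (Rmult_le_reg_r (INR N + 1)); [lra|].
    replace (INR N * (eta / (INR N + 1)) * (INR N + 1)) with (INR N * eta) by (field; lra). nra. }
  lra.
Qed.

Lemma limit_point_cv_subseq (N : nat) (n : Fin.t N -> nat) (u : nat -> forall i, vec (n i))
  (xb : forall i, vec (n i)) : limit_point u xb ->
  exists phi, strict_incr phi /\ forall i, cv_norm1 (fun k => u (phi k) i) (xb i).
Proof.
  intros Hlp.
  destruct (extract_subsequence (fun m t => dist_prod (u t) xb < / (INR m + 1))) as [phi [Hphi Hclose]].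
  { intros m T. destruct (Hlp (/ (INR m + 1)) T (inv_succ_pos m)) as [t Ht]. eauto. }
  exists phi. split; auto. intros i e He. pose proof (pos_INR (n i)).
  destruct (inv_succ_small (e / (INR (n i) + 1))) as [K HK]; [apply Rdiv_lt_0_compat; lra|].
  exists K. intros k Hk.
  assert (Hd : Defs.dist (u (phi k) i) (xb i) < / (INR k + 1)).
  { eapply Rle_lt_trans; [|apply Hclose].
    apply (fsum_term_le N (fun i => Defs.dist (u (phi k) i) (xb i))). intros; apply sqrt_pos. }
  eapply Rle_lt_trans; [apply norm1_le_norm2|]. fold (Defs.dist (u (phi k) i) (xb i)).
  apply Rle_lt_trans with (INR (n i) * (e / (INR (n i) + 1))).
  { apply Rmult_le_compat_l; auto. left. eapply Rlt_trans; [apply Hd|apply HK; auto]. }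
  apply (Rmult_lt_reg_r (INR (n i) + 1)); [lra|].
  replace (INR (n i) * (e / (INR (n i) + 1)) * (INR (n i) + 1)) with (INR (n i) * e) by (field; lra).
  nra.
Qed.

(** * Approximate penalty duality by regret matching *)

Fixpoint psum (F : nat -> R) (T : nat) : R :=
  match T with O => 0 | S T' => psum F T' + F T' end.

Lemma psum_add F G T : psum (fun u => F u + G u) T = psum F T + psum G T.
Proof. induction T; simpl; [lra|]. rewrite IHT. ring. Qed.

Lemma psum_scal F c T : psum (fun u => c * F u) T = c * psum F T.
Proof. induction T; simpl; [ring|]. rewrite IHT. ring. Qed.

Lemma psum_lt F T c : (1 <= T)%nat -> (forall u, F u < c) -> psum F T < INR T * c.
Proof.
  intros HT H. induction T; [lia|]. rewrite S_INR. simpl psum. destruct T.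
  - simpl. specialize (H 0%nat). lra.
  - assert (psum F (S T) < INR (S T) * c) by (apply IHT; lia). specialize (H (S T)). lra.
Qed.

Definition pos (x : R) := Rmax x 0.

Lemma pos_ge0 x : 0 <= pos x. Proof. apply Rmax_r. Qed.

Lemma pos_add_sq x d : pos (x + d) ^ 2 <= (pos x + d) ^ 2.
Proof. unfold pos, Rmax. destruct (Rle_dec (x + d) 0); destruct (Rle_dec x 0); nra. Qed.

Lemma le_sqrt_of_pos_sq x c : pos x ^ 2 <= c -> x <= sqrt c.
Proof.
  intros H. apply Rle_trans with (pos x); [apply Rmax_l|].
  rewrite <- (sqrt_pow2 (pos x)) by apply pos_ge0. apply sqrt_le_1_alt; auto.
Qed.

Lemma sq_le_of_Rabs_le x c : Rabs x <= c -> x ^ 2 <= c ^ 2.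
Proof.
  intros H. pose proof (Rabs_pos x).
  destruct (Rcase_abs x); [rewrite Rabs_left in H by lra|rewrite Rabs_right in H by lra]; nra.
Qed.

(* The regret-matching strategy of Hart and Mas-Colell for the game in which a multiplier
   mu with mu >= 0 and sum mu <= K is played against a point a, with payoff h(a).  The
   regrets are [Rg s] (against the vertex K e_s) and [R0] (against the vertex 0). *)
Section RegretMatching.
Variables (Sd : nat) (K : R).
Hypothesis HK : 0 <= K.

Definition rm_total (Rg : vec Sd) (R0 : R) := pos R0 + fsum Sd (fun s => pos (Rg s)).

Definition rm_mu (Rg : vec Sd) (R0 : R) : vec Sd :=
  fun s => if Rlt_dec 0 (rm_total Rg R0) then K * pos (Rg s) / rm_total Rg R0 else 0.

Definition rm_potential (Rg : vec Sd) (R0 : R) := pos R0 ^ 2 + fsum Sd (fun s => pos (Rg s) ^ 2).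

Lemma rm_total_ge0 Rg R0 : 0 <= rm_total Rg R0.
Proof.
  unfold rm_total. pose proof (pos_ge0 R0).
  pose proof (fsum_nonneg Sd (fun s => pos (Rg s)) (fun s => pos_ge0 _)). lra.
Qed.

Lemma rm_mu_admissible Rg R0 : vle (vzero Sd) (rm_mu Rg R0) /\ fsum Sd (rm_mu Rg R0) <= K.
Proof.
  unfold rm_mu. destruct (Rlt_dec 0 (rm_total Rg R0)) as [Hz|Hz].
  - set (Z := rm_total Rg R0) in *.
    assert (HP : 0 <= fsum Sd (fun s => pos (Rg s)) <= Z).
    { pose proof (fsum_nonneg Sd (fun s => pos (Rg s)) (fun s => pos_ge0 _)).
      unfold Z, rm_total. pose proof (pos_ge0 R0). lra. }
    split.
    + intros s. unfold vzero. apply Rmult_le_pos; [apply Rmult_le_pos; auto; apply pos_ge0|].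
      left; apply Rinv_0_lt_compat; auto.
    + rewrite (fsum_ext _ _ (fun s => (K / Z) * pos (Rg s))) by (intros; unfold Rdiv; ring).
      rewrite fsum_scal. apply (Rmult_le_reg_r Z); auto.
      replace (K / Z * fsum Sd (fun s => pos (Rg s)) * Z) with (K * fsum Sd (fun s => pos (Rg s)))
        by (field; lra). nra.
  - split; [intros s; unfold vzero; lra|]. rewrite fsum_zero; auto.
Qed.

(* Blackwell's condition: the regret increment is orthogonal to the positive part of the regrets. *)
Lemma rm_mu_blackwell Rg R0 (u : vec Sd) :
  let m := dot (rm_mu Rg R0) u in
  fsum Sd (fun s => pos (Rg s) * (K * u s - m)) + pos R0 * (- m) = 0.
Proof.
  intros m. pose proof (pos_ge0 R0).
  pose proof (fsum_nonneg Sd (fun s => pos (Rg s)) (fun s => pos_ge0 _)).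
  destruct (Rlt_dec 0 (rm_total Rg R0)) as [Hz|Hz].
  - set (Z := rm_total Rg R0) in *.
    set (A := fsum Sd (fun s => pos (Rg s) * u s)). set (P := fsum Sd (fun s => pos (Rg s))).
    assert (Hm : m = K / Z * A).
    { unfold m, dot, rm_mu. fold Z. destruct (Rlt_dec 0 Z); [|lra].
      unfold A. rewrite <- fsum_scal. apply fsum_ext. intros; unfold Rdiv; ring. }
    rewrite (fsum_ext _ _ (fun s => K * (pos (Rg s) * u s) + (- m) * pos (Rg s))) by (intros; ring).
    rewrite fsum_add, !fsum_scal. fold A P.
    assert (HZ : Z = pos R0 + P) by reflexivity.
    rewrite Hm, HZ in *. field. lra.
  - pose proof (rm_total_ge0 Rg R0). unfold rm_total in *.
    assert (HP : fsum Sd (fun s => pos (Rg s)) = 0) by lra.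
    assert (HR0 : pos R0 = 0) by lra.
    pose proof (fsum_eq0_term Sd _ (fun s => pos_ge0 _) HP) as Hs. simpl in Hs.
    rewrite HR0, (fsum_ext _ _ (fun _ => 0)), fsum_zero by (intros s; rewrite Hs; ring). ring.
Qed.

Lemma rm_potential_step B Rg R0 (u : vec Sd) : 0 <= B -> (forall s, Rabs (u s) <= B) ->
  let m := dot (rm_mu Rg R0) u in
  rm_potential (fun s => Rg s + (K * u s - m)) (R0 - m)
    <= rm_potential Rg R0 + (INR Sd + 1) * (2 * K * B) ^ 2.
Proof.
  intros HB Hu m.
  destruct (rm_mu_admissible Rg R0) as [Hmu0 HmuK].
  assert (Hm : Rabs m <= K * B).
  { unfold m, dot. eapply Rle_trans; [apply Rabs_fsum_le|].
    apply Rle_trans with (fsum Sd (fun s => B * rm_mu Rg R0 s)).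
    - apply fsum_le. intros s. rewrite Rabs_mult, Rabs_right by (apply Rle_ge, Hmu0).
      rewrite (Rmult_comm B). apply Rmult_le_compat_l; auto. apply Hmu0.
    - rewrite fsum_scal. nra. }
  assert (Hd : forall s, (K * u s - m) ^ 2 <= (2 * K * B) ^ 2).
  { intros s. pose proof (Hu s). apply sq_le_of_Rabs_le.
    eapply Rle_trans; [apply Rabs_triang|]. rewrite Rabs_Ropp, Rabs_mult, (Rabs_right K) by lra.
    assert (K * Rabs (u s) <= K * B) by (apply Rmult_le_compat_l; auto). lra. }
  assert (Hm2 : m ^ 2 <= (2 * K * B) ^ 2) by (apply sq_le_of_Rabs_le; nra).
  unfold rm_potential.
  assert (H1 : pos (R0 - m) ^ 2 <= (pos R0 - m) ^ 2) by apply pos_add_sq.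
  assert (H2 : fsum Sd (fun s => pos (Rg s + (K * u s - m)) ^ 2) <=
               fsum Sd (fun s => pos (Rg s) ^ 2 + 2 * (pos (Rg s) * (K * u s - m)) + (K * u s - m) ^ 2)).
  { apply fsum_le. intros s. eapply Rle_trans; [apply pos_add_sq|]. right; ring. }
  rewrite !fsum_add, fsum_scal in H2.
  pose proof (rm_mu_blackwell Rg R0 u) as Hb. simpl in Hb. fold m in Hb.
  assert (fsum Sd (fun s => (K * u s - m) ^ 2) <= INR Sd * (2 * K * B) ^ 2)
    by (rewrite <- fsum_const; apply fsum_le; auto).
  nra.
Qed.

Variables (A : Type) (h : A -> vec Sd) (br : vec Sd -> A) (B : R).
Hypothesis HB0 : 0 <= B.
Hypothesis HB : forall mu s, Rabs (h (br mu) s) <= B.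

Fixpoint rm_state (t : nat) : vec Sd * R :=
  match t with
  | O => (vzero Sd, 0)
  | S t' => let p := rm_state t' in
            let mu := rm_mu (fst p) (snd p) in
            let m := dot mu (h (br mu)) in
            ((fun s => fst p s + (K * h (br mu) s - m)), snd p - m)
  end.

Definition rm_strategy t := rm_mu (fst (rm_state t)) (snd (rm_state t)).
Definition rm_play t := br (rm_strategy t).
Definition rm_gain t := dot (rm_strategy t) (h (rm_play t)).

Lemma rm_state_regrets t :
  (forall s, fst (rm_state t) s = K * psum (fun u => h (rm_play u) s) t - psum rm_gain t) /\
  snd (rm_state t) = - psum rm_gain t.
Proof.
  induction t as [|t [IH1 IH0]]; simpl; [split; [intros; unfold vzero|]; ring|].
  fold (rm_strategy t) (rm_play t) (rm_gain t). split.
  - intros s. rewrite IH1. ring.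
  - rewrite IH0. ring.
Qed.

Lemma rm_potential_bound t :
  rm_potential (fst (rm_state t)) (snd (rm_state t)) <= INR t * ((INR Sd + 1) * (2 * K * B) ^ 2).
Proof.
  induction t; simpl.
  - unfold rm_potential, vzero, pos. rewrite Rmax_right by lra.
    rewrite (fsum_ext _ _ (fun _ => 0)); [rewrite fsum_zero; lra|].
    intros; ring.
  - pose proof (rm_potential_step B (fst (rm_state t)) (snd (rm_state t))
                  (h (br (rm_mu (fst (rm_state t)) (snd (rm_state t))))) HB0 (fun s => HB _ s)) as Hs.
    cbv zeta in Hs. destruct t; simpl INR in *; lra.
Qed.

Lemma rm_regrets_le t :
  let c := sqrt (INR t * ((INR Sd + 1) * (2 * K * B) ^ 2)) in
  (forall s, fst (rm_state t) s <= c) /\ snd (rm_state t) <= c.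
Proof.
  intros c. pose proof (rm_potential_bound t) as Hp. unfold rm_potential in Hp.
  pose proof (pow2_ge_0 (pos (snd (rm_state t)))).
  pose proof (fsum_nonneg Sd (fun s => pos (fst (rm_state t) s) ^ 2) (fun s => pow2_ge_0 _)).
  split.
  - intros s. apply le_sqrt_of_pos_sq.
    pose proof (fsum_term_le Sd (fun s => pos (fst (rm_state t) s) ^ 2) s (fun s => pow2_ge_0 _)).
    cbv beta in *. lra.
  - apply le_sqrt_of_pos_sq. lra.
Qed.

End RegretMatching.

Arguments rm_state {Sd} K {A} h br t.
Arguments rm_strategy {Sd} K {A} h br t.
Arguments rm_play {Sd} K {A} h br t.
Arguments rm_gain {Sd} K {A} h br t.

Definition comb_closed {A} (Xa : A -> Prop) (comb : R -> A -> A -> A) :=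
  forall th x y, 0 <= th <= 1 -> Xa x -> Xa y -> Xa (comb th x y).

Definition comb_convex {A} (Xa : A -> Prop) (comb : R -> A -> A -> A) (F : A -> R) :=
  forall th x y, 0 <= th <= 1 -> Xa x -> Xa y -> F (comb th x y) <= th * F x + (1 - th) * F y.

Fixpoint running_avg {A} (comb : R -> A -> A -> A) (a : nat -> A) (t : nat) : A :=
  match t with O => a O | S t' => comb (/ (INR t' + 2)) (a (S t')) (running_avg comb a t') end.

Lemma running_avg_in {A} (Xa : A -> Prop) comb (a : nat -> A) :
  comb_closed Xa comb -> (forall t, Xa (a t)) -> forall t, Xa (running_avg comb a t).
Proof.
  intros Hc Ha t. induction t; simpl; auto. apply Hc; auto.
  pose proof (pos_INR t). split; [left; apply Rinv_0_lt_compat; lra|].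
  rewrite <- Rinv_1. apply Rinv_le_contravar; lra.
Qed.

Lemma running_avg_jensen {A} (Xa : A -> Prop) comb (F : A -> R) (a : nat -> A) :
  comb_closed Xa comb -> comb_convex Xa comb F -> (forall t, Xa (a t)) ->
  forall t, (INR t + 1) * F (running_avg comb a t) <= psum (fun u => F (a u)) (S t).
Proof.
  intros Hc HF Ha t. induction t as [|t IH]; simpl; [lra|].
  pose proof (pos_INR t).
  assert (Hth : 0 <= / (INR t + 2) <= 1).
  { split; [left; apply Rinv_0_lt_compat; lra|]. rewrite <- Rinv_1. apply Rinv_le_contravar; lra. }
  pose proof (HF _ _ _ Hth (Ha (S t)) (running_avg_in Xa comb a Hc Ha t)) as Hj.
  apply (Rmult_le_compat_l (INR t + 2)) in Hj; [|lra].
  replace ((INR t + 2) * (/ (INR t + 2) * F (a (S t)) + (1 - / (INR t + 2)) * F (running_avg comb a t)))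
    with (F (a (S t)) + (INR t + 1) * F (running_avg comb a t)) in Hj by (field; lra).
  simpl in IH. destruct t; simpl INR in *; lra.
Qed.

Section PenaltyDuality.
Variables (A : Type) (Xa : A -> Prop) (comb : R -> A -> A -> A) (f : A -> R)
  (Sd : nat) (h : A -> vec Sd) (K B b : R).
Hypotheses (HK : 0 < K) (HB : 0 <= B) (Hc : comb_closed Xa comb) (Hfc : comb_convex Xa comb f)
  (Hhc : forall s, comb_convex Xa comb (fun a => h a s))
  (HhB : forall a s, Xa a -> Rabs (h a s) <= B)
  (Hb : forall a r, Xa a -> 0 <= r -> (forall s, h a s <= r) -> b <= f a + K * r).

(* Averaging the plays of regret matching against [br] gives a point violating the
   penalty bound [Hb]. *)
Lemma no_uniform_best_response eps (br : vec Sd -> A) : 0 < eps -> (forall mu, Xa (br mu)) ->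
  (forall mu, vle (vzero Sd) mu -> fsum Sd mu <= K -> f (br mu) + dot mu (h (br mu)) < b - eps) ->
  False.
Proof.
  intros He Hbr_in Hbr.
  set (play := rm_play K h br). set (gain := rm_gain K h br).
  assert (Hplay : forall t, Xa (play t)) by (intros; apply Hbr_in).
  assert (Hgain : forall t, f (play t) + gain t < b - eps).
  { intros t. destruct (rm_mu_admissible Sd K (Rlt_le _ _ HK) (fst (rm_state K h br t))
                                                          (snd (rm_state K h br t))).
    apply Hbr; auto. }
  set (Dc := (INR Sd + 1) * (2 * K * B) ^ 2).
  assert (HDc : 0 <= Dc) by (unfold Dc; pose proof (pos_INR Sd); nra).
  destruct (exists_pos_nat_ge (Dc / eps ^ 2)) as [T [HT1 HT]].
  assert (HTp : 0 < INR T) by (apply lt_0_INR; lia).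
  assert (Hsq : sqrt (INR T * Dc) <= INR T * eps).
  { rewrite <- (sqrt_pow2 (INR T * eps)) by nra. apply sqrt_le_1_alt.
    apply (Rmult_le_compat_r (eps ^ 2)) in HT; [|nra].
    replace (Dc / eps ^ 2 * eps ^ 2) with Dc in HT by (field; lra). nra. }
  destruct (rm_regrets_le Sd K (Rlt_le _ _ HK) A h br B HB (fun mu s => HhB _ s (Hbr_in mu)) T)
    as [HRg HR0].
  fold Dc in HRg, HR0.
  destruct (rm_state_regrets Sd K A h br T) as [F1 F0].
  set (SM := psum gain T) in *. set (SF := psum (fun u => f (play u)) T).
  assert (HSFM : SF + SM < INR T * (b - eps)).
  { unfold SF, SM. rewrite <- psum_add. apply psum_lt; auto. }
  destruct T as [|t0]; [lia|].
  set (abar := running_avg comb play t0).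
  set (r := (SM + INR (S t0) * eps) / (INR (S t0) * K)).
  assert (Hr0 : 0 <= r).
  { unfold r. apply Rmult_le_pos; [|left; apply Rinv_0_lt_compat; nra].
    rewrite F0 in HR0. fold gain in HR0. fold SM in HR0. lra. }
  assert (Hhr : forall s, h abar s <= r).
  { intros s. pose proof (running_avg_jensen Xa comb (fun z => h z s) play Hc (Hhc s) Hplay t0) as H.
    fold abar in H. rewrite <- S_INR in H.
    pose proof (HRg s) as Hs. rewrite F1 in Hs. fold gain play SM in Hs.
    unfold r. apply (Rmult_le_reg_l (INR (S t0) * K)); [nra|].
    replace (INR (S t0) * K * ((SM + INR (S t0) * eps) / (INR (S t0) * K)))
      with (SM + INR (S t0) * eps) by (field; lra). nra. }
  pose proof (Hb abar r (running_avg_in Xa comb play Hc Hplay t0) Hr0 Hhr) as Hbar.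
  pose proof (running_avg_jensen Xa comb f play Hc Hfc Hplay t0) as Hf2.
  fold abar in Hf2. rewrite <- S_INR in Hf2. fold SF in Hf2.
  assert (HKr : INR (S t0) * (K * r) = SM + INR (S t0) * eps) by (unfold r; field; lra).
  nra.
Qed.

Lemma approx_penalty_duality : (exists a, Xa a) -> forall eps, 0 < eps ->
  exists mu, vle (vzero Sd) mu /\ fsum Sd mu <= K /\ forall a, Xa a -> b - eps <= f a + dot mu (h a).
Proof.
  intros [a0 Ha0] eps He. apply NNPP. intros Hn.
  destruct (choice (fun (mu : vec Sd) a => Xa a /\
      (vle (vzero Sd) mu -> fsum Sd mu <= K -> f a + dot mu (h a) < b - eps))) as [br Hbr].
  { intros mu. destruct (classic (vle (vzero Sd) mu /\ fsum Sd mu <= K)) as [[H1 H2]|H].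
    - apply NNPP. intros H3. apply Hn. exists mu. repeat split; auto. intros a Ha.
      apply Rnot_lt_le. intros H4. apply H3. exists a. auto.
    - exists a0. split; auto. intros; exfalso; auto. }
  apply (no_uniform_best_response eps br He); apply Hbr.
Qed.

End PenaltyDuality.

(** * Duality for the local problems and for (P) *)

Lemma is_inf_exists (A : R -> Prop) :
  (exists c, A c) -> (exists lb, forall c, A c -> lb <= c) -> exists v, is_inf A v.
Proof.
  intros [c Hc] [lb Hlb].
  destruct (completeness (fun x => A (- x))) as [m [Hm1 Hm2]].
  - exists (- lb). intros x Hx. specialize (Hlb _ Hx). lra.
  - exists (- c). rewrite Ropp_involutive. auto.
  - exists (- m). split.
    + intros c' Hc'. assert (- c' <= m) by (apply Hm1; rewrite Ropp_involutive; auto). lra.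
    + intros b Hb. assert (m <= - b) by (apply Hm2; intros x Hx; specialize (Hb _ Hx); lra). lra.
Qed.

Lemma is_inf_approx (A : R -> Prop) v e : is_inf A v -> 0 < e -> exists c, A c /\ c < v + e.
Proof.
  intros [_ Hinf] He. apply NNPP. intros Hn.
  assert (v + e <= v); [|lra].
  apply Hinf. intros c Hc. apply Rnot_lt_le. intros Hlt. apply Hn. exists c; auto.
Qed.

Section LocalProblem.
Variables (m Sd : nat) (X : vec m -> Prop) (f : vec m -> R) (g : vec m -> vec Sd).
Hypotheses (HX : is_compact X) (HXc : convex_set X) (Hf : convex_fun f)
           (Hg : forall s, convex_fun (fun z => g z s)).
Variables (M : R) (c : vec Sd) (x : vec m) (rho : R) (mu : vec Sd).
Hypotheses (HM : 0 < M) (Hpd : loc_pd_opt X f g M c x rho mu).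

(* Strong duality for the local problem, derived from [approx_penalty_duality]. *)
Lemma loc_lagr_ge_value y r : X y -> 0 <= r -> f x + M * rho <= loc_lagr f g M c mu y r.
Proof.
  destruct Hpd as [[Hfeas Hopt] [Hmu0 Hdual]].
  destruct (convex_vec_bounded_on_compact m Sd X g HX Hg) as [Bg [HBg0 HBg]].
  intros Hy Hr. apply Rnot_lt_le. intros Hlt.
  set (v := f x + M * rho) in *.
  set (eps := (v - loc_lagr f g M c mu y r) / 2).
  destruct (approx_penalty_duality (vec m) X vcomb f Sd (fun a s => g a s + c s) M (Bg + norm1 c))
    with (b := v) (eps := eps) as [mu' [Hm1 [Hm2 Hm3]]].
  - auto.
  - pose proof (norm1_nonneg c); lra.
  - intros th a b Hth Ha Hb. apply HXc; auto.
  - intros th a b Hth Ha Hb. apply Hf; auto.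
  - intros s th a b Hth Ha Hb. pose proof (Hg s a b th Hth). unfold vcomb in *. cbv beta in *. lra.
  - intros a s Ha. eapply Rle_trans; [apply Rabs_triang|].
    pose proof (HBg s a Ha). pose proof (Rabs_coord_le_norm1 c s). lra.
  - intros a r0 Ha Hr0 Hs. apply Hopt. repeat split; auto.
  - exists x. apply Hfeas.
  - unfold eps; lra.
  - assert (Hlb : forall y r, X y -> 0 <= r -> v - eps <= loc_lagr f g M c mu' y r).
    { intros y0 r0 Hy0 Hr0. unfold loc_lagr. rewrite dot_sub_r, dot_const_r.
      pose proof (Hm3 y0 Hy0). assert (r0 * fsum Sd mu' <= M * r0) by nra.
      change (dot mu' (vadd (g y0) c)) with (dot mu' (fun s => g y0 s + c s)). lra. }
    pose proof (Hdual mu' Hm1 (v - eps) Hlb y r Hy Hr). unfold eps in *. lra.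
Qed.

Lemma loc_dual_opt_sum_le : fsum Sd mu <= M.
Proof.
  destruct Hpd as [[[_ [Hx _]] _] _].
  apply Rnot_lt_le. intros Hlt.
  set (C0 := f x + dot mu (vadd (g x) c)). set (v := f x + M * rho).
  set (r := (Rabs C0 + Rabs v + 1) / (fsum Sd mu - M)).
  assert (Hr : 0 <= r).
  { unfold r. apply Rmult_le_pos; [pose proof (Rabs_pos C0); pose proof (Rabs_pos v); lra|].
    left; apply Rinv_0_lt_compat; lra. }
  pose proof (loc_lagr_ge_value x r Hx Hr) as H. unfold loc_lagr in H.
  rewrite dot_sub_r, dot_const_r in H. fold C0 v in H.
  assert (r * (fsum Sd mu - M) = Rabs C0 + Rabs v + 1) by (unfold r; field; lra).
  assert (C0 = f x + dot mu (vadd (g x) c)) by reflexivity. pose proof (Rle_abs C0). pose proof (Rle_abs (- v)). rewrite Rabs_Ropp in *. nra.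
Qed.

Lemma loc_value_subgradient x' r' c' : X x' -> 0 <= r' -> (forall s, g x' s + c' s <= r') ->
  f x + M * rho + dot mu (vsub c' c) <= f x' + M * r'.
Proof.
  destruct Hpd as [_ [Hmu0 _]].
  intros Hx' Hr' Hc'.
  pose proof (loc_lagr_ge_value x' r' Hx' Hr') as H. unfold loc_lagr in H.
  rewrite dot_sub_r, dot_add_r, dot_const_r in H.
  assert (dot mu (vadd (g x') c') <= dot mu (vconst Sd r')) by (apply dot_le_r; auto).
  rewrite dot_add_r, dot_const_r in H0. rewrite dot_sub_r. lra.
Qed.

End LocalProblem.

Section Primal.
Variables (N Sd : nat) (n : Fin.t N -> nat) (X : forall i, vec (n i) -> Prop)
  (f : forall i, vec (n i) -> R) (g : forall i, vec (n i) -> vec Sd).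
Hypotheses (HX : forall i, is_compact (X i)) (HXc : forall i, convex_set (X i))
  (Hf : forall i, convex_fun (f i)) (Hg : forall i s, convex_fun (fun z => g i z s)).

Definition pcomb (th : R) (a b : forall i, vec (n i)) : forall i, vec (n i) :=
  fun i => vcomb th (a i) (b i).

Lemma fsum_pcomb_convex (h : forall i, vec (n i) -> R) th a b :
  (forall i, convex_fun (h i)) -> 0 <= th <= 1 ->
  fsum N (fun i => h i (pcomb th a b i))
    <= th * fsum N (fun i => h i (a i)) + (1 - th) * fsum N (fun i => h i (b i)).
Proof.
  intros Hh Hth. rewrite <- !fsum_scal, <- fsum_add. apply fsum_le. intros i. apply Hh; auto.
Qed.

Lemma P_optimum_exists fstar : P_optval X f g fstar ->
  exists xs, P_feasible X g xs /\ P_cost f xs <= fstar.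
Proof.
  intros Hopt.
  destruct (choice (fun k y => P_feasible X g y /\ P_cost f y < fstar + / (INR k + 1))) as [u Hu].
  { intros k. destruct (is_inf_approx _ _ _ Hopt (inv_succ_pos k)) as [c [[y [Hy ->]] Hc]].
    exists y; auto. }
  destruct (product_convergent_subseq N n X HX u (fun k => proj1 (proj1 (Hu k))))
    as [phi [p [Hi Hp]]].
  assert (Hcv : forall i, cv_norm1 (fun k => u (phi k) i) (p i)) by apply Hp.
  exists p. split; [split|].
  - intros i; apply Hp.
  - intros s. apply Rnot_lt_le. intros Hs.
    set (eta := fsum N (fun i => g i (p i) s) / 2).
    destruct (fsum_convex_lsc N n (fun i z => g i z s) (fun k => u (phi k)) p
                (fun i => Hg i s) Hcv eta) as [K HK]; [unfold eta; lra|].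
    specialize (HK K (le_n _)). pose proof (proj2 (proj1 (Hu (phi K))) s).
    simpl in HK. unfold eta in *. lra.
  - apply Rnot_lt_le. intros Hs.
    set (eta := (P_cost f p - fstar) / 2).
    destruct (fsum_convex_lsc N n f (fun k => u (phi k)) p Hf Hcv eta) as [K HK]; [unfold eta; lra|].
    destruct (inv_succ_small eta) as [T HT]; [unfold eta; lra|].
    specialize (HK (max K T) (Nat.le_max_l _ _)).
    pose proof (proj2 (Hu (phi (max K T)))).
    pose proof (strict_incr_ge_id phi Hi (max K T)).
    pose proof (HT (phi (max K T)) ltac:(lia)).
    unfold P_cost in *. unfold eta in *. lra.
Qed.

Lemma fsum_lagrangian mu z :
  fsum N (fun i => f i (z i) + dot mu (g i (z i)))
    = P_cost f z + dot mu (fun s => fsum N (fun i => g i (z i) s)).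
Proof.
  rewrite fsum_add. unfold P_cost, dot. f_equal. rewrite fsum_comm. apply fsum_ext. intros s.
  rewrite fsum_scal. reflexivity.
Qed.

Lemma fsum_q_val_ge mu (qv : Fin.t N -> R) c :
  (forall i, q_val X f g i mu (qv i)) ->
  (forall z, (forall i, X i (z i)) -> c <= fsum N (fun i => f i (z i) + dot mu (g i (z i)))) ->
  c <= fsum N qv.
Proof.
  intros Hq Hc. apply Rnot_lt_le. intros Hlt. pose proof (pos_INR N).
  set (d := (c - fsum N qv) / (INR N + 1)).
  assert (Hd : 0 < d) by (unfold d; apply Rdiv_lt_0_compat; lra).
  destruct (dep_choice (fun i y => X i y /\ f i y + dot mu (g i y) < qv i + d)) as [z Hz].
  { intros i. destruct (is_inf_approx _ _ _ (Hq i) Hd) as [c0 [[y [Hy ->]] Hc0]]. eauto. }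
  pose proof (Hc z (fun i => proj1 (Hz i))).
  assert (Hs : fsum N (fun i => f i (z i) + dot mu (g i (z i))) <= fsum N (fun i => qv i + d))
    by (apply fsum_le; intros i; left; apply Hz).
  rewrite (fsum_add N qv (fun _ => d)), fsum_const in Hs.
  assert (INR N * d < c - fsum N qv).
  { unfold d. apply (Rmult_lt_reg_r (INR N + 1)); [lra|].
    replace (INR N * ((c - fsum N qv) / (INR N + 1)) * (INR N + 1)) with (INR N * (c - fsum N qv))
      by (field; lra). nra. }
  lra.
Qed.

Variables (xbar : forall i, vec (n i)) (fstar : R).
Hypotheses (Hxbar : forall i, X i (xbar i))
           (Hslater : vlt (fun s => fsum N (fun i => g i (xbar i) s)) (vzero Sd))
           (Hopt : P_optval X f g fstar).

(* Mixing z with the Slater point xbar restores feasibility. *)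
Lemma slater_penalty : exists K, 0 < K /\ forall z r, (forall i, X i (z i)) -> 0 <= r ->
  (forall s, fsum N (fun i => g i (z i) s) <= r) -> fstar <= P_cost f z + K * r.
Proof.
  destruct Hopt as [Hinf _].
  destruct (fin_pos_lower_bound (fun s => - fsum N (fun i => g i (xbar i) s))) as [d [Hd Hds]].
  { intros s. specialize (Hslater s). unfold vzero in Hslater. lra. }
  assert (Hfs : fstar <= P_cost f xbar).
  { apply Hinf. exists xbar. repeat split; auto.
    intros s. specialize (Hslater s). unfold vzero in Hslater. lra. }
  set (K := (P_cost f xbar - fstar) / d + 1).
  assert (HK0 : 0 <= (P_cost f xbar - fstar) / d)
    by (apply Rmult_le_pos; [lra|left; apply Rinv_0_lt_compat; lra]).
  exists K. split; [unfold K; lra|].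
  intros z r Hz Hr Hzs.
  set (th := d / (r + d)).
  assert (Hth : 0 <= th <= 1).
  { unfold th. split; [apply Rmult_le_pos; [lra|left; apply Rinv_0_lt_compat; lra]|].
    apply (Rmult_le_reg_r (r + d)); [lra|]. unfold Rdiv. rewrite Rmult_assoc, Rinv_l by lra. lra. }
  assert (Hw : P_feasible X g (pcomb th z xbar)).
  { split; [intros i; apply HXc; auto|].
    intros s. eapply Rle_trans; [apply (fsum_pcomb_convex (fun i y => g i y s)); auto|].
    pose proof (Hzs s). pose proof (Hds s). simpl in *.
    assert (th * fsum N (fun i => g i (z i) s) <= th * r) by (apply Rmult_le_compat_l; lra).
    assert ((1 - th) * fsum N (fun i => g i (xbar i) s) <= (1 - th) * (- d))
      by (apply Rmult_le_compat_l; lra).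
    assert (th * r + (1 - th) * (- d) = 0) by (unfold th; field; lra). lra. }
  assert (fstar <= P_cost f (pcomb th z xbar)) by (apply Hinf; eauto).
  assert (P_cost f (pcomb th z xbar) <= th * P_cost f z + (1 - th) * P_cost f xbar)
    by (apply fsum_pcomb_convex; auto).
  assert (Hr2 : fstar * (r + d) <= d * P_cost f z + r * P_cost f xbar).
  { assert (Hc : fstar <= th * P_cost f z + (1 - th) * P_cost f xbar) by lra.
    apply (Rmult_le_compat_l (r + d)) in Hc; [|lra].
    replace ((r + d) * (th * P_cost f z + (1 - th) * P_cost f xbar))
      with (d * P_cost f z + r * P_cost f xbar) in Hc by (unfold th; field; lra). lra. }
  assert (K * r * d >= r * (P_cost f xbar - fstar)).
  { unfold K. replace (((P_cost f xbar - fstar) / d + 1) * r * d)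
      with (r * (P_cost f xbar - fstar) + r * d) by (field; lra). nra. }
  apply (Rmult_le_reg_r d); [lra|]. nra.
Qed.

Lemma approx_dual_multiplier eps : 0 < eps -> exists mu', vle (vzero Sd) mu' /\
  forall z, (forall i, X i (z i)) ->
    fstar - eps <= P_cost f z + dot mu' (fun s => fsum N (fun i => g i (z i) s)).
Proof.
  intros He. destruct slater_penalty as [K [HK Hpen]].
  destruct (fin_uniform_bound (fun i B => forall s y, X i y -> Rabs (g i y s) <= B)) as [Bg [HBg0 HBg]].
  { intros i B B' H1 H2 s y Hy; specialize (H1 s y Hy); lra. }
  { intros i. destruct (convex_vec_bounded_on_compact _ Sd (X i) (g i) (HX i) (Hg i)) as [B [_ HB]].
    eauto. }
  destruct (approx_penalty_duality (forall i, vec (n i)) (fun z => forall i, X i (z i)) pcomb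
              (P_cost f) Sd (fun z s => fsum N (fun i => g i (z i) s)) K (INR N * Bg))
    with (b := fstar) (eps := eps) as [mu' [H1 [_ H3]]]; eauto.
  - pose proof (pos_INR N); nra.
  - intros th a b Hth Ha Hb i. apply HXc; auto.
  - intros th a b Hth Ha Hb. apply fsum_pcomb_convex; auto.
  - intros s th a b Hth Ha Hb. apply (fsum_pcomb_convex (fun i y => g i y s)); auto.
  - intros a s Ha. apply Rabs_fsum_bound. intros i; apply HBg; auto.
Qed.

Lemma q_val_exists mu : exists qv : Fin.t N -> R, forall i, q_val X f g i mu (qv i).
Proof.
  destruct (fin_uniform_bound (fun i B => forall y, X i y -> Rabs (f i y) <= B)) as [Bf [_ HBf]].
  { intros i B B' H1 H2 y Hy; specialize (H1 y Hy); lra. }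
  { intros i; apply convex_bounded_on_compact; auto. }
  destruct (fin_uniform_bound (fun i B => forall s y, X i y -> Rabs (g i y s) <= B)) as [Bg [_ HBg]].
  { intros i B B' H1 H2 s y Hy; specialize (H1 s y Hy); lra. }
  { intros i. destruct (convex_vec_bounded_on_compact _ Sd (X i) (g i) (HX i) (Hg i)) as [B [_ HB]].
    eauto. }
  apply (dep_choice (fun i v => q_val X f g i mu v)). intros i. apply is_inf_exists.
  - exists (f i (xbar i) + dot mu (g i (xbar i))), (xbar i); auto.
  - exists (- (Bf + INR Sd * (norm1 mu * Bg))). intros c [y [Hy ->]].
    pose proof (HBf i y Hy).
    assert (Rabs (dot mu (g i y)) <= INR Sd * (norm1 mu * Bg)).
    { unfold dot. apply Rabs_fsum_bound. intros s. rewrite Rabs_mult.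
      apply Rmult_le_compat; try apply Rabs_pos; [apply Rabs_coord_le_norm1|apply HBg; auto]. }
    pose proof (Rle_abs (- dot mu (g i y))). pose proof (Rle_abs (- f i y)).
    rewrite Rabs_Ropp in *. lra.
Qed.

(* Exact penalty: a dual optimal mu* turns the coupling constraint into the penalty
   ||mu*||_1 * R, with no duality gap thanks to Slater's condition. *)
Lemma exact_penalty (mustar : vec Sd) : D_optimal X f g mustar ->
  forall z R0, (forall i, X i (z i)) -> 0 <= R0 ->
  (forall s, fsum N (fun i => g i (z i) s) <= R0) -> fstar <= P_cost f z + norm1 mustar * R0.
Proof.
  intros [Hms0 Hmsopt] z R0 Hz HR0 Hzs.
  destruct (q_val_exists mustar) as [qs Hqs].
  assert (Hqs_ge : fstar <= fsum N qs).
  { apply Rnot_lt_le. intros Hlt. set (eps := (fstar - fsum N qs) / 2).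
    destruct (approx_dual_multiplier eps) as [mu' [Hmu'0 Hmu']]; [unfold eps; lra|].
    destruct (q_val_exists mu') as [qv' Hqv'].
    pose proof (Hmsopt mu' Hmu'0 qs qv' Hqs Hqv').
    assert (fstar - eps <= fsum N qv').
    { apply (fsum_q_val_ge mu' qv' _ Hqv'). intros z0 Hz0. rewrite fsum_lagrangian. auto. }
    unfold eps in *. lra. }
  assert (Hz2 : fsum N qs <= P_cost f z + dot mustar (fun s => fsum N (fun i => g i (z i) s))).
  { rewrite <- fsum_lagrangian. apply fsum_le. intros i. apply (proj1 (Hqs i)). eauto. }
  assert (Hpen : dot mustar (fun s => fsum N (fun i => g i (z i) s)) <= dot mustar (vconst Sd R0))
    by (apply dot_le_r; auto).
  assert (Hnorm : norm1 mustar = fsum Sd mustar).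
  { unfold norm1. apply fsum_ext. intros s. apply Rabs_right. apply Rle_ge, Hms0. }
  rewrite dot_const_r in Hpen. rewrite Hnorm. lra.
Qed.

End Primal.

(** * Flows on the communication graph *)

Section Flows.
Variables (N Sd : nat) (E : Fin.t N -> Fin.t N -> bool).
Hypothesis Hsym : forall i j, E i j = E j i.

Lemma nbsum_add (l1 l2 : Fin.t N -> Fin.t N -> vec Sd) i s :
  nbsum E (fun a b => vadd (l1 a b) (l2 a b)) i s = nbsum E l1 i s + nbsum E l2 i s.
Proof. unfold nbsum, vadd. rewrite <- fsum_add. apply fsum_ext. intros j. destruct (E i j); ring. Qed.

Lemma nbsum_sub (l1 l2 : Fin.t N -> Fin.t N -> vec Sd) i :
  nbsum E (fun a b => vsub (l1 a b) (l2 a b)) i = vsub (nbsum E l1 i) (nbsum E l2 i).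
Proof.
  apply vec_ext. intros s. unfold nbsum, vsub. rewrite <- fsum_sub. apply fsum_ext.
  intros j. destruct (E i j); ring.
Qed.

Lemma fsum_nbsum (lam : Fin.t N -> Fin.t N -> vec Sd) s : fsum N (fun i => nbsum E lam i s) = 0.
Proof.
  unfold nbsum.
  rewrite (fsum_ext _ _ (fun i => fsum N (fun j => if E i j then lam i j s else 0)
                                  - fsum N (fun j => if E i j then lam j i s else 0))).
  - rewrite fsum_sub, (fsum_comm N N (fun i j => if E i j then lam j i s else 0)).
    rewrite (fsum_ext N (fun j => fsum N (fun i => if E i j then lam j i s else 0))
                        (fun j => fsum N (fun i => if E j i then lam j i s else 0))); [ring|].
    intros j. apply fsum_ext. intros i. rewrite Hsym. reflexivity.
  - intros i. rewrite <- fsum_sub. apply fsum_ext. intros j. destruct (E i j); ring.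
Qed.

Definition edge_flow (x y : Fin.t N) (a : vec Sd) : Fin.t N -> Fin.t N -> vec Sd :=
  fun p q => if Fin.eq_dec p x then if Fin.eq_dec q y then a else vzero Sd else vzero Sd.

Definition point_mass (x : Fin.t N) (k : Fin.t N) (c : R) := if Fin.eq_dec k x then c else 0.

Lemma nbsum_edge_flow x y a : E x y = true -> x <> y ->
  forall k s, nbsum E (edge_flow x y a) k s = point_mass x k (a s) - point_mass y k (a s).
Proof.
  intros Hxy Hne k s. assert (Hyx : E y x = true) by (rewrite Hsym; auto).
  unfold nbsum, point_mass.
  rewrite (fsum_ext _ _ (fun l => (if Fin.eq_dec l y then point_mass x k (a s) else 0)
                                  - (if Fin.eq_dec l x then point_mass y k (a s) else 0))).
  - rewrite fsum_sub, !fsum_delta. reflexivity.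
  - intros l. unfold edge_flow, point_mass, vzero.
    destruct (E k l) eqn:He, (Fin.eq_dec k x), (Fin.eq_dec l y), (Fin.eq_dec l x),
      (Fin.eq_dec k y); subst; try congruence; ring.
Qed.

Hypothesis Hirr : forall i, E i i = false.

Lemma path_flow i j : clos_refl_trans (Fin.t N) (fun a b => E a b = true) i j ->
  forall a : vec Sd, exists lam, forall k s,
    nbsum E lam k s = point_mass i k (a s) - point_mass j k (a s).
Proof.
  induction 1 as [x y Hxy|x|x y z _ IH1 _ IH2]; intros a.
  - exists (edge_flow x y a). apply nbsum_edge_flow; auto.
    intros ->. rewrite Hirr in Hxy. discriminate.
  - exists (fun _ _ => vzero Sd). intros k s. unfold nbsum, vzero.
    rewrite (fsum_ext _ _ (fun _ => 0)), fsum_zero by (intros l; destruct (E k l); ring). ring.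
  - destruct (IH1 a) as [l1 H1]. destruct (IH2 a) as [l2 H2].
    exists (fun p q => vadd (l1 p q) (l2 p q)). intros k s. rewrite nbsum_add, H1, H2. ring.
Qed.

(* Route the demand of every node to a fixed root along a path. *)
Lemma nbsum_surjective : connected E -> (0 < N)%nat ->
  forall y : Fin.t N -> vec Sd, (forall s, fsum N (fun i => y i s) = 0) ->
  exists lam, forall i s, nbsum E lam i s = y i s.
Proof.
  intros Hcon HN y Hy. set (r := Fin.of_nat_lt HN).
  destruct (choice (fun i lam => forall k s,
      nbsum E lam k s = point_mass i k (y i s) - point_mass r k (y i s))) as [L HL].
  { intros i. apply path_flow, Hcon. }
  exists (fun p q t => fsum N (fun i => L i p q t)). intros k s.
  unfold nbsum at 1. rewrite (fsum_ext _ _ (fun j => fsum N (fun i =>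
      if E k j then L i k j s - L i j k s else 0))) by
    (intros j; destruct (E k j); [rewrite fsum_sub|rewrite fsum_zero]; reflexivity).
  rewrite fsum_comm, (fsum_ext _ _ (fun i => point_mass i k (y i s) - point_mass r k (y i s)))
    by (intros i; rewrite <- HL; reflexivity).
  rewrite fsum_sub. unfold point_mass. rewrite fsum_delta_l.
  destruct (Fin.eq_dec k r); [rewrite Hy|rewrite fsum_zero]; ring.
Qed.

Definition edge_inner (d D : Fin.t N -> Fin.t N -> vec Sd) : R :=
  fsum N (fun i => fsum N (fun j => if E i j then dot (d i j) (D i j) else 0)).

Lemma edge_inner_ext (d D D' : Fin.t N -> Fin.t N -> vec Sd) :
  (forall i j, E i j = true -> D i j = D' i j) -> edge_inner d D = edge_inner d D'.
Proof.
  intros H. unfold edge_inner. apply fsum_ext; intros i. apply fsum_ext; intros j.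
  destruct (E i j) eqn:He; auto. rewrite H; auto.
Qed.

Lemma edge_inner_scal (d D : Fin.t N -> Fin.t N -> vec Sd) c :
  edge_inner d (fun i j => vscale c (D i j)) = c * edge_inner d D.
Proof.
  unfold edge_inner. rewrite <- fsum_scal. apply fsum_ext; intros i.
  rewrite <- fsum_scal. apply fsum_ext; intros j.
  destruct (E i j); [|ring]. unfold dot, vscale. rewrite <- fsum_scal. apply fsum_ext; intros; ring.
Qed.

Lemma edge_inner_bound (d D : Fin.t N -> Fin.t N -> vec Sd) a b : 0 <= a -> 0 <= b ->
  (forall i j s, Rabs (d i j s) <= a) -> (forall i j s, Rabs (D i j s) <= b) ->
  Rabs (edge_inner d D) <= INR N * (INR N * (INR Sd * (a * b))).
Proof.
  intros Ha Hb Hd HD. unfold edge_inner. apply Rabs_fsum_bound. intros i. apply Rabs_fsum_bound.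
  intros j. destruct (E i j).
  - unfold dot. apply Rabs_fsum_bound. intros s. rewrite Rabs_mult.
    apply Rmult_le_compat; auto using Rabs_pos.
  - rewrite Rabs_R0. pose proof (pos_INR Sd). pose proof (Rmult_le_pos _ _ Ha Hb).
    apply Rmult_le_pos; auto.
Qed.

Lemma edge_inner_sub_swap (d a b : Fin.t N -> Fin.t N -> vec Sd) :
  edge_inner d (fun i j => vsub (b i j) (a i j)) = - edge_inner d (fun i j => vsub (a i j) (b i j)).
Proof.
  replace (- edge_inner d (fun i j => vsub (a i j) (b i j)))
    with (-1 * edge_inner d (fun i j => vsub (a i j) (b i j))) by ring.
  rewrite <- edge_inner_scal.
  apply edge_inner_ext. intros i j _. apply vec_ext. intros s. unfold vscale, vsub. ring.
Qed.

Lemma nbsum_adjoint (mu : Fin.t N -> vec Sd) (lam : Fin.t N -> Fin.t N -> vec Sd) :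
  fsum N (fun i => dot (mu i) (nbsum E lam i)) = edge_inner (fun i j => vsub (mu i) (mu j)) lam.
Proof.
  rewrite (fsum_ext _ _ (fun i => fsum N (fun j => if E i j then dot (mu i) (lam i j) else 0)
                                  - fsum N (fun j => if E i j then dot (mu i) (lam j i) else 0))).
  - rewrite fsum_sub, (fsum_comm N N (fun i j => if E i j then dot (mu i) (lam j i) else 0)).
    unfold edge_inner. rewrite <- fsum_sub. apply fsum_ext. intros i.
    rewrite <- fsum_sub. apply fsum_ext. intros j.
    rewrite Hsym. destruct (E j i); [|ring]. rewrite dot_sub_l. reflexivity.
  - intros i. rewrite <- fsum_sub. unfold dot at 1, nbsum.
    rewrite (fsum_ext _ _ (fun s => fsum N (fun j => if E i j then mu i s * (lam i j s - lam j i s) else 0))).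
    + rewrite fsum_comm. apply fsum_ext. intros j. destruct (E i j).
      * unfold dot. rewrite <- fsum_sub. apply fsum_ext. intros; ring.
      * rewrite fsum_zero. ring.
    + intros s. rewrite <- fsum_scal. apply fsum_ext. intros j. destruct (E i j); ring.
Qed.

Lemma edge_inner_sq_update (l l' ls d : Fin.t N -> Fin.t N -> vec Sd) gam :
  (forall i j, E i j = true -> forall s, l' i j s = l i j s - gam * d i j s) ->
  edge_inner (fun i j => vsub (l' i j) (ls i j)) (fun i j => vsub (l' i j) (ls i j)) =
  edge_inner (fun i j => vsub (l i j) (ls i j)) (fun i j => vsub (l i j) (ls i j))
  - 2 * gam * edge_inner d (fun i j => vsub (l i j) (ls i j)) + gam ^ 2 * edge_inner d d.
Proof.
  intros H. unfold edge_inner. rewrite <- !fsum_scal, <- fsum_sub, <- fsum_add.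
  apply fsum_ext. intros i. rewrite <- !fsum_scal, <- fsum_sub, <- fsum_add.
  apply fsum_ext. intros j. destruct (E i j) eqn:He; [|ring].
  unfold dot, vsub. rewrite <- !fsum_scal, <- fsum_sub, <- fsum_add.
  apply fsum_ext. intros s. rewrite H by auto. ring.
Qed.

Lemma edge_inner_self_nonneg (d : Fin.t N -> Fin.t N -> vec Sd) : 0 <= edge_inner d d.
Proof.
  apply fsum_nonneg. intros i. apply fsum_nonneg. intros j. destruct (E i j); [|lra].
  apply fsum_nonneg. intros s. apply Rle_0_sqr.
Qed.

End Flows.

(** * Convergence of the subgradient recursion *)

Lemma sum_f_R0_psum F T : sum_f_R0 F T = psum F (S T).
Proof. induction T; simpl; [ring|]. rewrite IHT. simpl. ring. Qed.

Lemma psum_mono F a b : (forall u, 0 <= F u) -> (a <= b)%nat -> psum F a <= psum F b.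
Proof. intros H Hab. induction Hab; [lra|]. simpl. specialize (H m). lra. Qed.

Lemma psum_range_le F H a b : (a <= b)%nat -> (forall u, (a <= u)%nat -> (u < b)%nat -> H u <= F u) ->
  psum H b - psum H a <= psum F b - psum F a.
Proof.
  intros Hab Hu. induction Hab; [lra|]. simpl.
  assert (H m <= F m) by (apply Hu; lia).
  assert (psum H m - psum H a <= psum F m - psum F a) by (apply IHHab; intros; apply Hu; lia).
  lra.
Qed.

Lemma least_nat (P : nat -> Prop) : (exists n, P n) -> exists n, P n /\ forall m, (m < n)%nat -> ~ P m.
Proof.
  intros [n Hn]. revert Hn. induction n as [n IH] using lt_wf_ind. intros Hn.
  destruct (classic (exists m, (m < n)%nat /\ P m)) as [[m [Hm1 Hm2]]|Hno].
  - apply (IH m Hm1 Hm2).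
  - exists n. split; auto. intros m Hm HP. apply Hno. exists m; auto.
Qed.

Lemma psum_bounded_small_tail (w : nat -> R) A : (forall t, 0 <= w t) -> (forall T, psum w T <= A) ->
  forall del, 0 < del -> exists T1, forall a b, (T1 <= a)%nat -> psum w b - psum w a <= del.
Proof.
  intros Hw HA del Hdel.
  destruct (completeness (fun x => exists T, x = psum w T)) as [L [HL1 HL2]].
  { exists A. intros x [T ->]. auto. }
  { exists (psum w 0); eauto. }
  apply NNPP. intros Hn.
  assert (L <= L - del); [|lra].
  apply HL2. intros x [T ->]. apply Rnot_lt_le. intros Hlt. apply Hn. exists T. intros a b Ha.
  pose proof (psum_mono w T a Hw Ha). assert (psum w b <= L) by (apply HL1; eauto). lra.
Qed.

Section DescentRecursion.
Variables (v D gam : nat -> R) (c G l : R).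
Hypotheses (HG : 0 <= G) (Hv : forall t, c <= v t) (HD : forall t, 0 <= D t)
  (Hgam : forall t, 0 <= gam t)
  (HDs : forall t, D (S t) <= D t - 2 * gam t * (v t - c) + gam t ^ 2 * G)
  (Hvs : forall t, Rabs (v (S t) - v t) <= gam t * G)
  (Hinf : cv_infty (fun T => sum_f_R0 gam T))
  (Hsq : Un_cv (fun T => sum_f_R0 (fun t => gam t ^ 2) T) l).

Let w t := gam t * (v t - c).

Lemma descent_weighted_gaps_bounded : forall T, psum w T <= (D 0%nat + G * l) / 2.
Proof.
  assert (Hsql : forall T, psum (fun t => gam t ^ 2) T <= l).
  { intros T. apply Rle_trans with (sum_f_R0 (fun t => gam t ^ 2) T).
    - rewrite sum_f_R0_psum. apply psum_mono; [intros; apply pow2_ge_0|lia].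
    - apply growing_ineq; auto. intros k. simpl. pose proof (pow2_ge_0 (gam (S k))). lra. }
  assert (H : forall T, 2 * psum w T <= D 0%nat - D T + G * psum (fun t => gam t ^ 2) T).
  { induction T; cbn [psum]; [lra|]. specialize (HDs T). unfold w in *. nra. }
  intros T. specialize (H T). specialize (HD T). specialize (Hsql T). nra.
Qed.

Lemma descent_returns_below eta t : 0 < eta -> exists s, (t <= s)%nat /\ v s - c < eta.
Proof.
  intros Heta. apply NNPP. intros Hn.
  assert (Hge : forall s, (t <= s)%nat -> eta <= v s - c).
  { intros s Hs. apply Rnot_lt_le. intros H. apply Hn. exists s; auto. }
  set (A := (D 0%nat + G * l) / 2).
  destruct (Hinf (psum gam t + (A + 1) / eta)) as [N0 HN0].
  set (b := max (S N0) t).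
  assert (Hb1 : psum gam t + (A + 1) / eta < psum gam b).
  { specialize (HN0 N0 (le_n _)). rewrite sum_f_R0_psum in HN0.
    pose proof (psum_mono gam (S N0) b Hgam (Nat.le_max_l _ _)). lra. }
  assert (Hb2 : psum (fun u => eta * gam u) b - psum (fun u => eta * gam u) t <= psum w b - psum w t).
  { apply psum_range_le; [unfold b; lia|].
    intros u Hu1 _. unfold w. specialize (Hge u Hu1). specialize (Hgam u). nra. }
  rewrite !psum_scal in Hb2.
  pose proof (descent_weighted_gaps_bounded b).
  assert (Hw0 : forall u, 0 <= w u) by (intros u; unfold w; specialize (Hv u); specialize (Hgam u); nra).
  pose proof (psum_mono w 0 t Hw0 (Nat.le_0_l _)). simpl in *.
  assert (eta * ((A + 1) / eta) = A + 1) by (field; lra).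
  assert (eta * (psum gam b - psum gam t) > A + 1) by (rewrite <- H1; apply Rmult_lt_compat_l; lra).
  fold A in H. nra.
Qed.

Lemma descent_telescope t k : v t - v (t + k)%nat <= G * (psum gam (t + k) - psum gam t).
Proof.
  induction k.
  - rewrite Nat.add_0_r. lra.
  - rewrite Nat.add_succ_r. simpl psum. specialize (Hvs (t + k)%nat).
    pose proof (Rle_abs (- (v (S (t + k)) - v (t + k)%nat))). rewrite Rabs_Ropp in *. nra.
Qed.

(* An excursion of v above c + eta must first come back below c + eta/2; by the Lipschitz
   bound this costs at least (eta/2)/G of step length spent above c + eta/2, i.e. a fixed
   amount of the convergent series sum gam (v - c). *)
Lemma descent_converges : Un_cv v c.
Proof.
  assert (Hw0 : forall u, 0 <= w u) by (intros u; unfold w; specialize (Hv u); specialize (Hgam u); nra).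
  intros eta Heta.
  set (del := eta ^ 2 / (8 * (G + 1))).
  assert (Hdel : 0 < del) by (unfold del; apply Rdiv_lt_0_compat; nra).
  destruct (psum_bounded_small_tail w _ Hw0 descent_weighted_gaps_bounded del Hdel) as [T1 HT1].
  exists T1. intros t Ht. unfold R_dist. rewrite Rabs_right by (specialize (Hv t); lra).
  apply Rnot_le_lt. intros Hbig.
  destruct (least_nat (fun u => (t <= u)%nat /\ v u - c < eta / 2)) as [s [[Hs1 Hs2] Hs3]].
  { apply descent_returns_below. lra. }
  assert (Hmid : forall u, (t <= u)%nat -> (u < s)%nat -> eta / 2 <= v u - c).
  { intros u Hu1 Hu2. apply Rnot_lt_le. intros H. apply (Hs3 u Hu2). auto. }
  pose proof (descent_telescope t (s - t)%nat) as Ht2. replace (t + (s - t))%nat with s in Ht2 by lia.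
  assert (Hpos : 0 <= psum gam s - psum gam t) by (pose proof (psum_mono gam t s Hgam Hs1); lra).
  assert (Hsg : eta / 2 < (G + 1) * (psum gam s - psum gam t)) by nra.
  assert (Hrange : psum (fun u => eta / 2 * gam u) s - psum (fun u => eta / 2 * gam u) t
                   <= psum w s - psum w t).
  { apply psum_range_le; auto.
    intros u Hu1 Hu2. unfold w. specialize (Hmid u Hu1 Hu2). specialize (Hgam u). nra. }
  rewrite !psum_scal in Hrange.
  pose proof (HT1 t s Ht).
  assert (eta / 2 * (psum gam s - psum gam t) > 2 * del).
  { unfold del. apply (Rmult_lt_reg_l (G + 1)); [lra|].
    replace ((G + 1) * (2 * (eta ^ 2 / (8 * (G + 1))))) with (eta / 2 * (eta / 2)) by (field; lra).
    replace ((G + 1) * (eta / 2 * (psum gam s - psum gam t)))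
      with (eta / 2 * ((G + 1) * (psum gam s - psum gam t))) by ring.
    apply Rmult_lt_compat_l; lra. }
  lra.
Qed.

End DescentRecursion.

(** * The distributed algorithm *)

Section Algorithm.
Variables (N Sd : nat) (n : Fin.t N -> nat)
  (X : forall i, vec (n i) -> Prop) (f : forall i, vec (n i) -> R)
  (g : forall i, vec (n i) -> vec Sd) (E : Fin.t N -> Fin.t N -> bool)
  (gamma : nat -> R) (mustar : vec Sd) (M : R)
  (lam : nat -> Fin.t N -> Fin.t N -> vec Sd)
  (x : nat -> forall i, vec (n i)) (rho : nat -> Fin.t N -> R) (mu : nat -> Fin.t N -> vec Sd).
Hypotheses (HN : (0 < N)%nat) (Hf : forall i, convex_fun (f i))
  (HX : forall i, is_compact (X i)) (HXc : forall i, convex_set (X i))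
  (Hg : forall i s, convex_fun (fun z => g i z s))
  (Hslater : exists xbar : forall i, vec (n i), (forall i, relint (X i) (xbar i)) /\
               vlt (fun s => fsum N (fun i => g i (xbar i) s)) (vzero Sd))
  (Hsym : forall i j, E i j = E j i) (Hirr : forall i, E i i = false) (Hcon : connected E)
  (Hgam : forall t, 0 <= gamma t)
  (Hinf : cv_infty (fun T => sum_f_R0 gamma T))
  (Hsq : exists l, Un_cv (fun T => sum_f_R0 (fun t => gamma t ^ 2) T) l)
  (HDopt : D_optimal X f g mustar) (HM : norm1 mustar < M)
  (Hloc : forall t i, loc_pd_opt (X i) (f i) (g i) M (nbsum E (lam t) i)
                        (x (S t) i) (rho (S t) i) (mu (S t) i))
  (Hupd : forall t i j, E i j = true ->
            forall s, lam (S t) i j s = lam t i j s - gamma t * (mu (S t) i s - mu (S t) j s)).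

(* [value t] is the optimal value of the relaxed problem at the multipliers [lam t]: the
   algorithm is a subgradient method minimising it over [lam]. *)
Definition value t := fsum N (fun i => f i (x (S t) i) + M * rho (S t) i).
Definition slack t := fsum N (rho (S t)).
Definition mu_diff t i j := vsub (mu (S t) i) (mu (S t) j).

Definition relaxed_feasible (lam' : Fin.t N -> Fin.t N -> vec Sd) (z : forall i, vec (n i))
  (r : Fin.t N -> R) :=
  forall i, X i (z i) /\ 0 <= r i /\ forall s, g i (z i) s + nbsum E lam' i s <= r i.

Lemma M_pos : 0 < M.
Proof. pose proof (norm1_nonneg mustar). lra. Qed.

Lemma iterate_feasible t : relaxed_feasible (lam t) (x (S t)) (rho (S t)).
Proof. intros i. destruct (Hloc t i) as [[[H1 [H2 H3]] _] _]. auto. Qed.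

Lemma mu_bounds t i s : 0 <= mu (S t) i s <= M.
Proof.
  pose proof (Hloc t i) as Hpd. pose proof (proj1 (proj2 Hpd)) as Hmu0.
  pose proof (loc_dual_opt_sum_le _ Sd (X i) (f i) (g i) (HX i) (HXc i) (Hf i) (Hg i) M _ _ _ _ M_pos Hpd).
  split; [apply Hmu0|]. pose proof (fsum_term_le Sd (mu (S t) i) s Hmu0). lra.
Qed.

Lemma mu_diff_bound t i j s : Rabs (mu_diff t i j s) <= M.
Proof.
  unfold mu_diff, vsub. pose proof (mu_bounds t i s). pose proof (mu_bounds t j s).
  apply Rabs_le. lra.
Qed.

Lemma value_subgradient t lam' z r : relaxed_feasible lam' z r ->
  value t + edge_inner N Sd E (mu_diff t) (fun i j => vsub (lam' i j) (lam t i j))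
    <= fsum N (fun i => f i (z i) + M * r i).
Proof.
  intros Hz. unfold value, mu_diff. rewrite <- nbsum_adjoint by auto. rewrite <- fsum_add.
  apply fsum_le. intros i. rewrite nbsum_sub. destruct (Hz i) as [Hzi [Hri Hgi]].
  apply (loc_value_subgradient _ Sd (X i) (f i) (g i) (HX i) (HXc i) (Hf i) (Hg i) M); auto.
  apply M_pos.
Qed.

Lemma relaxed_feasible_coupling lam' z r s : relaxed_feasible lam' z r ->
  fsum N (fun i => g i (z i) s) <= fsum N r.
Proof.
  intros Hz.
  assert (Hs : fsum N (fun i => g i (z i) s + nbsum E lam' i s) <= fsum N r)
    by (apply fsum_le; intros i; apply Hz).
  rewrite fsum_add, fsum_nbsum in Hs by auto. lra.
Qed.

Lemma relaxed_value_ge fstar : P_optval X f g fstar -> forall lam' z r, relaxed_feasible lam' z r ->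
  fstar + (M - norm1 mustar) * fsum N r <= fsum N (fun i => f i (z i) + M * r i).
Proof.
  intros Hopt lam' z r Hz. destruct Hslater as [xbar [Hxb1 Hxb2]].
  assert (fstar <= P_cost f z + norm1 mustar * fsum N r).
  { apply (exact_penalty N Sd n X f g HX HXc Hf Hg xbar fstar (fun i => proj1 (Hxb1 i)) Hxb2 Hopt
             mustar HDopt); [apply Hz| |].
    - apply fsum_nonneg. apply Hz.
    - intros s. apply (relaxed_feasible_coupling lam' z r s Hz). }
  rewrite fsum_add, fsum_scal. unfold P_cost in *. lra.
Qed.

Lemma slack_le_value_gap fstar : P_optval X f g fstar ->
  forall t, (M - norm1 mustar) * slack t <= value t - fstar.
Proof.
  intros Hopt t. pose proof (relaxed_value_ge fstar Hopt _ _ _ (iterate_feasible t)).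
  unfold value, slack. lra.
Qed.

(* Multipliers under which an optimal solution of (P) is feasible for the relaxation with
   zero slack: they spread the total constraint value evenly over the nodes. *)
Lemma optimal_multipliers_exist fstar : P_optval X f g fstar ->
  exists lst, forall t, value t + edge_inner N Sd E (mu_diff t) (fun i j => vsub (lst i j) (lam t i j)) <= fstar.
Proof.
  intros Hopt. destruct (P_optimum_exists N Sd n X f g HX Hf Hg fstar Hopt) as [xs [[Hxs1 Hxs2] Hxs3]].
  assert (HNr : 0 < INR N) by (apply lt_0_INR; lia).
  destruct (nbsum_surjective N Sd E Hsym Hirr Hcon HN
               (fun i s => - g i (xs i) s + fsum N (fun k => g k (xs k) s) / INR N)) as [lst Hlst].
  { intros s. rewrite fsum_add, fsum_opp, fsum_const. field. lra. }
  exists lst. intros t. eapply Rle_trans; [apply (value_subgradient t lst xs (fun _ => 0))|].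
  - intros i. repeat split; auto; [lra|]. intros s. rewrite Hlst. specialize (Hxs2 s).
    assert (fsum N (fun k => g k (xs k) s) / INR N <= 0).
    { unfold Rdiv. pose proof (Rinv_0_lt_compat _ HNr). nra. }
    lra.
  - unfold P_cost in Hxs3. rewrite (fsum_ext _ _ (fun i => f i (xs i))) by (intros; ring). auto.
Qed.

Let G := INR N * (INR N * (INR Sd * (M * M))).

Lemma mu_diff_inner_bound t D : (forall i j s, Rabs (D i j s) <= M) ->
  Rabs (edge_inner N Sd E (mu_diff t) D) <= G.
Proof.
  intros HD. pose proof M_pos. apply edge_inner_bound; auto; try lra. apply mu_diff_bound.
Qed.

Lemma lam_step t : forall i j, E i j = true ->
  vsub (lam t i j) (lam (S t) i j) = vscale (gamma t) (mu_diff t i j).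
Proof.
  intros i j He. apply vec_ext. intros s. unfold vsub, vscale, mu_diff. rewrite Hupd by auto.
  unfold vsub. ring.
Qed.

Lemma value_lipschitz t : Rabs (value (S t) - value t) <= gamma t * G.
Proof.
  pose proof (value_subgradient (S t) (lam t) (x (S t)) (rho (S t)) (iterate_feasible t)) as H1.
  pose proof (value_subgradient t (lam (S t)) (x (S (S t))) (rho (S (S t))) (iterate_feasible (S t))) as H2.
  rewrite (edge_inner_ext _ _ _ _ _ (fun i j => vscale (gamma t) (mu_diff t i j))), edge_inner_scal
    in H1 by apply lam_step.
  rewrite edge_inner_sub_swap, (edge_inner_ext _ _ _ _ _ (fun i j => vscale (gamma t) (mu_diff t i j))),
    edge_inner_scal in H2 by apply lam_step.
  fold (value t) in H1. fold (value (S t)) in H2.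
  pose proof (mu_diff_inner_bound (S t) (mu_diff t) (mu_diff_bound t)) as B1.
  pose proof (mu_diff_inner_bound t (mu_diff t) (mu_diff_bound t)) as B2.
  pose proof (Hgam t).
  set (a1 := edge_inner N Sd E (mu_diff (S t)) (mu_diff t)) in *.
  set (a2 := edge_inner N Sd E (mu_diff t) (mu_diff t)) in *.
  pose proof (Rle_abs a1). pose proof (Rle_abs (- a1)). pose proof (Rle_abs a2).
  pose proof (Rle_abs (- a2)). rewrite Rabs_Ropp in *.
  assert (gamma t * (- a1) <= gamma t * G) by (apply Rmult_le_compat_l; lra).
  assert (gamma t * a2 <= gamma t * G) by (apply Rmult_le_compat_l; lra).
  apply Rabs_le. split; nra.
Qed.

Lemma value_converges fstar : P_optval X f g fstar -> Un_cv value fstar.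
Proof.
  intros Hopt. destruct Hsq as [l Hl].
  destruct (optimal_multipliers_exist fstar Hopt) as [lst Hlst].
  set (D := fun t => edge_inner N Sd E (fun i j => vsub (lam t i j) (lst i j))
                                       (fun i j => vsub (lam t i j) (lst i j))).
  apply (descent_converges value D gamma fstar G l); auto.
  - pose proof M_pos. pose proof (pos_INR N). pose proof (pos_INR Sd).
    unfold G. repeat apply Rmult_le_pos; lra.
  - intros t. pose proof (slack_le_value_gap fstar Hopt t).
    assert (0 <= slack t) by (apply fsum_nonneg; intros; apply iterate_feasible).
    assert (0 <= (M - norm1 mustar) * slack t) by (apply Rmult_le_pos; lra). lra.
  - intros t. apply edge_inner_self_nonneg.
  - intros t. unfold D.
    rewrite (edge_inner_sq_update N Sd E (lam t) (lam (S t)) lst (mu_diff t) (gamma t))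
      by (intros i j He s; rewrite Hupd by auto; reflexivity).
    pose proof (Hlst t) as Hl0. rewrite edge_inner_sub_swap in Hl0.
    pose proof (Rle_abs (edge_inner N Sd E (mu_diff t) (mu_diff t))).
    pose proof (mu_diff_inner_bound t (mu_diff t) (mu_diff_bound t)).
    pose proof (Hgam t).
    assert (gamma t ^ 2 * edge_inner N Sd E (mu_diff t) (mu_diff t) <= gamma t ^ 2 * G)
      by (apply Rmult_le_compat_l; [apply pow2_ge_0|lra]).
    nra.
  - apply value_lipschitz.
Qed.

Lemma slack_vanishes fstar : P_optval X f g fstar ->
  forall e, 0 < e -> exists K, forall t, (K <= t)%nat -> slack t < e.
Proof.
  intros Hopt e He. destruct (value_converges fstar Hopt ((M - norm1 mustar) * e)) as [K HK].
  { apply Rmult_lt_0_compat; lra. }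
  exists K. intros t Ht. specialize (HK t Ht). unfold R_dist in HK.
  pose proof (slack_le_value_gap fstar Hopt t). pose proof (Rle_abs (value t - fstar)).
  apply (Rmult_lt_reg_l (M - norm1 mustar)); lra.
Qed.

Lemma P_optval_exists : exists fstar, P_optval X f g fstar.
Proof.
  destruct (fin_uniform_bound (fun i B => forall y, X i y -> Rabs (f i y) <= B)) as [Bf [_ HBf]].
  { intros i B B' H1 H2 y Hy; specialize (H1 y Hy); lra. }
  { intros i; apply convex_bounded_on_compact; auto. }
  destruct Hslater as [xbar [Hxb1 Hxb2]].
  apply is_inf_exists.
  - exists (P_cost f xbar), xbar. repeat split; auto; [apply Hxb1|].
    intros s. specialize (Hxb2 s). unfold vzero in Hxb2. lra.
  - exists (- (INR N * Bf)). intros c [y [[Hy1 _] ->]]. unfold P_cost.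
    assert (Rabs (fsum N (fun i => f i (y i))) <= INR N * Bf) by (apply Rabs_fsum_bound; auto).
    pose proof (Rle_abs (- fsum N (fun i => f i (y i)))). rewrite Rabs_Ropp in *. lra.
Qed.

(* Along a subsequence converging to xb, lower semicontinuity of the convex data together with
   slack t -> 0 and value t -> f* passes feasibility and optimality to the limit. *)
Lemma limit_point_optimal xb : limit_point (fun t => x (S t)) xb -> P_optimal X f g xb.
Proof.
  intros Hlp. destruct P_optval_exists as [fstar Hopt].
  destruct (limit_point_cv_subseq N n _ xb Hlp) as [phi [Hphi Hconv]].
  assert (Hlate : forall K1 K2, exists k, (K1 <= k)%nat /\ (K2 <= phi k)%nat).
  { intros K1 K2. exists (max K1 K2). pose proof (strict_incr_ge_id phi Hphi (max K1 K2)). lia. }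
  assert (HXb : forall i, X i (xb i)).
  { intros i. apply (compact_closed_limit (X i)); auto. intros e He.
    destruct (Hconv i e He) as [K HK]. exists (x (S (phi K)) i).
    split; [apply iterate_feasible|]. apply HK; lia. }
  assert (Hfeas : P_feasible X g xb).
  { split; auto. intros s. apply Rnot_lt_le. intros Hs.
    set (eta := fsum N (fun i => g i (xb i) s) / 3).
    destruct (fsum_convex_lsc N n (fun i z => g i z s) (fun k => x (S (phi k))) xb
                (fun i => Hg i s) Hconv eta) as [K1 HK1]; [unfold eta; lra|].
    destruct (slack_vanishes fstar Hopt eta) as [K2 HK2]; [unfold eta; lra|].
    destruct (Hlate K1 K2) as [k [Hk1 Hk2]].
    specialize (HK1 k Hk1). specialize (HK2 (phi k) Hk2).
    pose proof (relaxed_feasible_coupling _ _ _ s (iterate_feasible (phi k))).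
    simpl in HK1. unfold slack, eta in *. lra. }
  assert (Hcost : P_cost f xb <= fstar).
  { apply Rnot_lt_le. intros Hs.
    set (eta := (P_cost f xb - fstar) / 3).
    destruct (fsum_convex_lsc N n f (fun k => x (S (phi k))) xb Hf Hconv eta) as [K1 HK1];
      [unfold eta; lra|].
    destruct (value_converges fstar Hopt eta) as [K2 HK2]; [unfold eta; lra|].
    destruct (Hlate K1 K2) as [k [Hk1 Hk2]].
    specialize (HK1 k Hk1). specialize (HK2 (phi k) Hk2). unfold R_dist in HK2.
    pose proof (Rle_abs (value (phi k) - fstar)).
    assert (fsum N (fun i => f i (x (S (phi k)) i)) <= value (phi k)).
    { unfold value. apply fsum_le. intros i. pose proof (proj1 (proj2 (iterate_feasible (phi k) i))).
      pose proof M_pos. nra. }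
    unfold eta in *. unfold P_cost in *. lra. }
  split; auto. intros y Hy. destruct Hopt as [Hinf' _].
  pose proof (Hinf' (P_cost f y) (ex_intro _ y (conj Hy eq_refl))). lra.
Qed.

End Algorithm.

Theorem theorem1 (N Sd : nat) (n : Fin.t N -> nat)
  (X : forall i, vec (n i) -> Prop) (f : forall i, vec (n i) -> R)
  (g : forall i, vec (n i) -> vec Sd)
  (E : Fin.t N -> Fin.t N -> bool)
  (gamma : nat -> R) (mustar : vec Sd) (M : R)
  (lam : nat -> Fin.t N -> Fin.t N -> vec Sd)
  (x : nat -> forall i, vec (n i)) (rho : nat -> Fin.t N -> R)
  (mu : nat -> Fin.t N -> vec Sd) :
  (0 < N)%nat -> (0 < Sd)%nat -> (forall i, (0 < n i)%nat) ->
  (* (A1) *)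
  (forall i, convex_fun (f i)) ->
  (forall i, exists z, X i z) ->
  (forall i, is_compact (X i)) ->
  (forall i, convex_set (X i)) ->
  (forall i s, convex_fun (fun z => g i z s)) ->
  (* (A2) Slater *)
  (exists xbar : forall i, vec (n i),
      (forall i, relint (X i) (xbar i)) /\
      vlt (fun s => fsum N (fun i => g i (xbar i) s)) (vzero Sd)) ->
  (forall i j, E i j = E j i) -> (forall i, E i i = false) -> connected E ->
  (forall t, 0 <= gamma t) ->
  cv_infty (fun T => sum_f_R0 gamma T) ->
  (exists l, Un_cv (fun T => sum_f_R0 (fun t => (gamma t) ^ 2) T) l) ->
  D_optimal X f g mustar -> norm1 mustar < M ->
  (* step (1): primal-dual optimal pair of the local problem *)
  (forall t i, loc_pd_opt (X i) (f i) (g i) M (nbsum E (lam t) i)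
                 (x (S t) i) (rho (S t) i) (mu (S t) i)) ->
  (* step (2): multiplier update on the edges *)
  (forall t i j, E i j = true ->
     forall s, lam (S t) i j s = lam t i j s - gamma t * (mu (S t) i s - mu (S t) j s)) ->
  (forall fstar, P_optval X f g fstar ->
     Un_cv (fun t => fsum N (fun i => f i (x (S t) i) + M * rho (S t) i)) fstar) /\
  (forall xb, limit_point (fun t => x (S t)) xb -> P_optimal X f g xb).
Proof.
  intros HN _ _ Hf _ HX HXc Hg Hslater Hsym Hirr Hcon Hgam Hinf Hsq HDopt HM Hloc Hupd.
  split.
  - intros fstar Hopt. eapply value_converges; eassumption.
  - intros xb Hlp. eapply limit_point_optimal; eassumption.
Qed.
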